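(* For $i\ge1$ let $$y_i=(1+\alpha)\,\mathbf E\Big[\mathbb I_{\{Z\le i,\ \Lambda\ge 1\}}\frac{\Gamma(i+2\Lambda)}{\Gamma(i+2\Lambda+\alpha+2)}\cdot\frac{\Gamma(Z+2\Lambda+\alpha+1)}{\Gamma(Z+2\Lambda)}\Big].$$ Then, as $i\to\infty$, $$y_i\sim \lambda(1+\alpha)^2\Gamma(2+\alpha)\, i^{-2-\alpha}\ln i,$$ where $a_i\sim b_i$ means $a_i/b_i\to1$.
   Context: Fix $\lambda>0$ and an integer $k\ge1$, and let $\alpha=k/\lambda$. $\Lambda$ is a Poisson random variable with mean $\lambda$; $Z=\sum_{i=1}^{\Lambda}T_i$, where $T_1,T_2,\dots$ are i.i.d., independent of $\Lambda$, with $\mathbf P(T_1=j)=x_{j+1}$, $x_{j+1}=(1+\alpha)\Gamma(2+\alpha)\frac{\Gamma(j+1)}{\Gamma(3+\alpha+j)}$ for $j=0,1,2,\dots$. *)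

From Stdlib Require Import Reals Lra Lia Classical ClassicalEpsilon.
Open Scope R_scope.

Fixpoint rising_prod (x : R) (n : nat) : R :=
  match n with
  | O => x
  | S m => rising_prod x m * (x + INR (S m))
  end.

(* Gauss/Euler limit formula: Gamma x = lim n^x n! / (x (x+1) ... (x+n)). *)
Definition gauss_seq (x : R) (n : nat) : R :=
  Rpower (INR n) x * INR (Factorial.fact n) / rising_prod x n.

(* Gamma function (defined for x > 0, the only case used here);
   chosen as the limit of gauss_seq x. *)
Definition Gamma (x : R) : R :=
  epsilon (inhabits 0) (fun l => Un_cv (gauss_seq x) l).

(* Law of T_1: P(T_1 = j) = x_{j+1}. *)
Definition pT (alpha : R) (j : nat) : R :=
  (1 + alpha) * Gamma (2 + alpha) * Gamma (INR j + 1) / Gamma (3 + alpha + INR j).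

(* m-fold convolution: conv alpha m z = P(T_1 + ... + T_m = z). *)
Fixpoint conv (alpha : R) (m : nat) (z : nat) : R :=
  match m with
  | O => if Nat.eqb z 0 then 1 else 0
  | S m' => sum_f_R0 (fun j => pT alpha j * conv alpha m' (z - j)) z
  end.

Definition poisson (lambda : R) (m : nat) : R :=
  exp (- lambda) * lambda ^ m / INR (Factorial.fact m).

(* Integrand of y_i on the event {Lambda = m, Z = z}. *)
Definition yfactor (alpha : R) (i m z : nat) : R :=
  Gamma (INR i + 2 * INR m) / Gamma (INR i + 2 * INR m + alpha + 2)
  * (Gamma (INR z + 2 * INR m + alpha + 1) / Gamma (INR z + 2 * INR m)).

(* m-th term of the series for y_i  (m >= 1 enforced; Z <= i via the inner sum). *)
Definition yterm (lambda alpha : R) (i : nat) (m : nat) : R :=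
  if Nat.eqb m 0 then 0 else
  (1 + alpha) * poisson lambda m *
  sum_f_R0 (fun z => conv alpha m z * yfactor alpha i m z) i.

From Stdlib Require Import Reals Lra Lia ClassicalEpsilon.
Open Scope R_scope.

(* On {Λ = m} the m-th term of the series is
     (1+a) P(Λ=m) · U_m(i) · H_m(i),
   with the prefactor U_m(i) = Γ(i+2m)/Γ(i+2m+a+2) ~ i^(-2-a) and the weighted
   moment H_m(i) = E[Γ(S_m+2m+a+1)/Γ(S_m+2m); S_m <= i], S_m = T_1 + ... + T_m.
   The law of T has tail P(T = j) ~ c j^(-2-a) with c = (1+a)Γ(2+a), hence the
   truncated moment E[T^(1+a); T <= i] ~ c ln i, and for sums of heavy-tailed
   variables the truncated (1+a)-moment is additive: E[S_m^(1+a); S_m <= i] ~ m c ln i.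
   Since Γ(x+1+a)/Γ(x) is x^(1+a) up to a bounded shift, H_m(i) ~ m c ln i too.
   The m-th normalized term therefore tends to P(Λ=m) m/λ, and Tannery's theorem
   (dominated convergence for series, with a geometric domination C L^m summable
   against the Poisson weights) gives y_i ~ λ(1+a)^2 Γ(2+a) i^(-2-a) ln i. *)

(** * Real powers *)

Lemma exp_le_mono x y : x <= y -> exp x <= exp y.
Proof. intros [H|H]; [left; apply exp_increasing; auto | subst; lra]. Qed.

Lemma ln_le_mono x y : 0 < x -> x <= y -> ln x <= ln y.
Proof. intros Hx [H|H]; [left; apply ln_increasing; auto | subst; lra]. Qed.

Lemma ln_le_sub1 y : 0 < y -> ln y <= y - 1.
Proof. intros Hy. pose proof (exp_ineq1_le (ln y)) as H. rewrite exp_ln in H; lra. Qed.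

Lemma ln_div_pos x y : 0 < x -> 0 < y -> ln (x / y) = ln x - ln y.
Proof. intros. unfold Rdiv. rewrite ln_mult, ln_Rinv; try lra. apply Rinv_0_lt_compat; auto. Qed.

Lemma Rdiv_nonneg x y : 0 <= x -> 0 < y -> 0 <= x / y.
Proof. apply Rle_mult_inv_pos. Qed.

Lemma Rdiv_le_1 x y : 0 < y -> x <= y -> x / y <= 1.
Proof.
  intros. apply Rmult_le_reg_r with y; auto. unfold Rdiv.
  rewrite Rmult_assoc, Rinv_l by lra. lra.
Qed.

Lemma Rpower_pos x p : 0 < Rpower x p.
Proof. unfold Rpower; apply exp_pos. Qed.

Lemma Rpower_1_base p : Rpower 1 p = 1.
Proof. unfold Rpower. rewrite ln_1, Rmult_0_r, exp_0; auto. Qed.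

Lemma Rpower_weighted_amgm A t : 0 < A -> 0 <= t <= 1 -> Rpower A t <= t * A + (1 - t).
Proof.
  intros HA Ht.
  set (w := t*A + (1-t)).
  assert (Hw : 0 < w). { unfold w. destruct (Req_dec t 0). subst; lra. nra. }
  assert (H1 := ln_le_sub1 (A / w) ltac:(apply Rdiv_lt_0_compat; auto)).
  assert (H2 := ln_le_sub1 (1 / w) ltac:(apply Rdiv_lt_0_compat; lra)).
  rewrite ln_div_pos in H1,H2 by lra. rewrite ln_1 in H2.
  assert (E: t*(A/w -1) + (1-t)*(1/w-1) = 0) by (unfold w in *; field; lra).
  assert (H3: t * (ln A - ln w) <= t * (A/w-1)) by (apply Rmult_le_compat_l; lra).
  assert (H4: (1-t) * (0 - ln w) <= (1-t) * (1/w-1)) by (apply Rmult_le_compat_l; lra).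
  assert (H5: t * ln A <= ln w) by nra.
  unfold Rpower. rewrite <- (exp_ln w) by auto. apply exp_le_mono. lra.
Qed.

Lemma Rpower_bernoulli s u : 1 <= s -> 0 < u -> 1 + s * (u - 1) <= Rpower u s.
Proof.
  intros Hs Hu.
  destruct (Rle_dec (1 + s*(u-1)) 0) as [Hle|Hgt].
  - pose proof (Rpower_pos u s); lra.
  - apply Rnot_le_lt in Hgt. set (v := 1 + s*(u-1)) in *.
    assert (Hi : 0 <= /s <= 1).
    { split. left; apply Rinv_0_lt_compat; lra. rewrite <- Rinv_1. apply Rinv_le_contravar; lra. }
    pose proof (Rpower_weighted_amgm v (/s) Hgt Hi) as H.
    assert (E: /s * v + (1 - /s) = u) by (unfold v; field; lra).
    rewrite E in H.
    assert (Hv: v = Rpower (Rpower v (/s)) s).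
    { rewrite Rpower_mult. replace (/s*s) with 1 by (field; lra). rewrite Rpower_1; auto. }
    rewrite Hv. apply Rle_Rpower_l. lra. split; auto. apply Rpower_pos.
Qed.

Lemma Rpower_tangent p u w : 1 <= p -> 0 < u -> 0 < w ->
  Rpower w p * (1 + p * (u / w - 1)) <= Rpower u p.
Proof.
  intros Hp Hu Hw.
  replace (Rpower u p) with (Rpower w p * Rpower (u/w) p).
  - apply Rmult_le_compat_l. left; apply Rpower_pos. apply Rpower_bernoulli; auto.
    apply Rdiv_lt_0_compat; auto.
  - rewrite Rpower_mult_distr; auto. f_equal; field; lra. apply Rdiv_lt_0_compat; auto.
Qed.

Lemma Rpower_chord p t : 1 <= p -> 0 <= t <= 1 -> Rpower (1+t) p <= 1 + (Rpower 2 p - 1) * t.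
Proof.
  intros Hp Ht.
  pose proof (Rpower_tangent p 1 (1+t) Hp ltac:(lra) ltac:(lra)) as H1.
  pose proof (Rpower_tangent p 2 (1+t) Hp ltac:(lra) ltac:(lra)) as H2.
  rewrite Rpower_1_base in H1.
  assert (E: (1-t) * (1 + p*(1/(1+t) - 1)) + t * (1 + p*(2/(1+t)-1)) = 1) by (field; lra).
  assert (H3: (1-t) * (Rpower (1+t) p * (1 + p*(1/(1+t) - 1))) <= (1-t) * 1)
    by (apply Rmult_le_compat_l; lra).
  assert (H4: t * (Rpower (1+t) p * (1 + p*(2/(1+t) - 1))) <= t * Rpower 2 p)
    by (apply Rmult_le_compat_l; lra).
  assert (Eq: (1-t) * (Rpower (1+t) p * (1 + p*(1/(1+t) - 1)))
              + t * (Rpower (1+t) p * (1 + p*(2/(1+t) - 1))) = Rpower (1+t) p).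
  { transitivity (Rpower (1+t) p * ((1-t) * (1 + p*(1/(1+t) - 1)) + t * (1 + p*(2/(1+t)-1))));
      [ring|rewrite E; ring]. }
  lra.
Qed.

Lemma Rpower2_ge_2 p : 1 <= p -> 2 <= Rpower 2 p.
Proof.
  intros. pose proof (Rpower_bernoulli p 2 H ltac:(lra)).
  replace (p*(2-1)) with p in H0 by ring. lra.
Qed.

Lemma Rpower2_ge1 q : 0 <= q -> 1 <= Rpower 2 q.
Proof. intros. rewrite <- (Rpower_O 2) by lra. apply Rle_Rpower; lra. Qed.

(* x^p for x >= 0, with the convention 0^p = 0 (Rpower is only meaningful for x > 0). *)
Definition rpow (x p : R) : R := if Rle_dec x 0 then 0 else Rpower x p.

Lemma rpow_pos_eq x p : 0 < x -> rpow x p = Rpower x p.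
Proof. intros. unfold rpow. destruct (Rle_dec x 0); auto. lra. Qed.

Lemma rpow_0 p : rpow 0 p = 0.
Proof. unfold rpow. destruct (Rle_dec 0 0); auto. lra. Qed.

Lemma rpow_nonneg x p : 0 <= rpow x p.
Proof. unfold rpow. destruct (Rle_dec x 0). lra. left; apply Rpower_pos. Qed.

Lemma rpow_pos x p : 0 < x -> 0 < rpow x p.
Proof. intros. rewrite rpow_pos_eq; auto. apply Rpower_pos. Qed.

Lemma rpow_mono p x y : 0 <= p -> 0 <= x <= y -> rpow x p <= rpow y p.
Proof.
  intros Hp [Hx Hxy]. destruct (Req_dec x 0).
  - subst. rewrite rpow_0. apply rpow_nonneg.
  - rewrite !rpow_pos_eq by lra. apply Rle_Rpower_l; lra.
Qed.

Lemma rpow_plus x p q : 0 <= x -> rpow x (p + q) = rpow x p * rpow x q.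
Proof.
  intros Hx. destruct (Req_dec x 0).
  - subst. rewrite !rpow_0; ring.
  - rewrite !rpow_pos_eq by lra. apply Rpower_plus.
Qed.

Lemma rpow_1 x : 0 <= x -> rpow x 1 = x.
Proof.
  intros Hx. destruct (Req_dec x 0).
  - subst. apply rpow_0.
  - rewrite rpow_pos_eq by lra. apply Rpower_1. lra.
Qed.

Lemma rpow_mult x y p : 0 <= x -> 0 <= y -> rpow (x * y) p = rpow x p * rpow y p.
Proof.
  intros Hx Hy. destruct (Req_dec x 0). subst. rewrite Rmult_0_l, rpow_0; ring.
  destruct (Req_dec y 0). subst. rewrite Rmult_0_r, rpow_0; ring.
  rewrite !rpow_pos_eq by nra. rewrite Rpower_mult_distr; auto; lra.
Qed.

Lemma rpow_pow2 x : 0 <= x -> rpow x 2 = x * x.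
Proof. intros. replace 2 with (1+1) by ring. rewrite rpow_plus, rpow_1; auto. Qed.

Lemma rpow_two_pow p n : rpow (2 ^ n) p = Rpower 2 p ^ n.
Proof.
  induction n.
  - simpl. rewrite rpow_pos_eq by lra. apply Rpower_1_base.
  - simpl. rewrite rpow_mult, IHn by (try lra; apply pow_le; lra). rewrite rpow_pos_eq by lra. auto.
Qed.

(* x^p is superadditive for p >= 1: the lower half of "heavy tails add up". *)
Lemma rpow_superadd p x y : 1 <= p -> 0 <= x -> 0 <= y -> rpow x p + rpow y p <= rpow (x + y) p.
Proof.
  intros Hp Hx Hy.
  replace p with ((p-1)+1) by ring.
  rewrite !rpow_plus, !rpow_1 by lra.
  assert (rpow x (p-1) <= rpow (x+y) (p-1)) by (apply rpow_mono; lra).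
  assert (rpow y (p-1) <= rpow (x+y) (p-1)) by (apply rpow_mono; lra).
  pose proof (rpow_nonneg x (p-1)). pose proof (rpow_nonneg y (p-1)). nra.
Qed.

Lemma rpow_add_upper_half p x y : 1 <= p -> 0 < x -> 0 <= y <= x ->
  rpow (x + y) p <= rpow x p + (Rpower 2 p - 1) * (y * rpow x (p - 1)).
Proof.
  intros Hp Hx Hy.
  rewrite !rpow_pos_eq by lra.
  replace (x + y) with (x * (1 + y/x)) by (field; lra).
  assert (0 < 1 + y/x) by (assert (0 <= y/x) by (apply Rdiv_nonneg; lra); lra).
  rewrite <- Rpower_mult_distr by lra.
  assert (Ht: 0 <= y/x <= 1).
  { split. apply Rdiv_nonneg; lra. apply Rdiv_le_1; lra. }
  pose proof (Rpower_chord p (y/x) Hp Ht) as Hc.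
  assert (Hxp: Rpower x p = Rpower x (p-1) * x).
  { rewrite <- (Rpower_1 x) at 3 by lra. rewrite <- Rpower_plus. f_equal; ring. }
  pose proof (Rpower_pos x p).
  apply Rle_trans with (Rpower x p * (1 + (Rpower 2 p - 1) * (y/x))).
  apply Rmult_le_compat_l; lra.
  rewrite Hxp. right. field. lra.
Qed.

(* Upper half of "heavy tails add up": (x+y)^p exceeds x^p + y^p only by
   cross terms of lower order. *)
Lemma rpow_add_upper p x y : 1 <= p -> 0 <= x -> 0 <= y ->
  rpow (x + y) p <= rpow x p + rpow y p + (Rpower 2 p - 1) * (y * rpow x (p-1) + x * rpow y (p-1)).
Proof.
  intros Hp Hx Hy.
  pose proof (Rpower2_ge_2 p Hp) as H2.
  pose proof (rpow_nonneg x p). pose proof (rpow_nonneg y p).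
  pose proof (rpow_nonneg x (p-1)). pose proof (rpow_nonneg y (p-1)).
  assert (0 <= (Rpower 2 p - 1) * (y * rpow x (p-1))) by (apply Rmult_le_pos; nra).
  assert (0 <= (Rpower 2 p - 1) * (x * rpow y (p-1))) by (apply Rmult_le_pos; nra).
  destruct (Rle_dec y x).
  - destruct (Req_dec x 0).
    + assert (y = 0) by lra. subst. rewrite Rplus_0_r, rpow_0. lra.
    + pose proof (rpow_add_upper_half p x y Hp ltac:(lra) ltac:(lra)). nra.
  - rewrite Rplus_comm. pose proof (rpow_add_upper_half p y x Hp ltac:(lra) ltac:(lra)). nra.
Qed.

Lemma rpow_add_le a x y : 0 <= a -> 0 <= x -> 0 <= y -> rpow (x + y) a <= Rpower 2 a * (rpow x a + rpow y a).
Proof.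
  intros Ha Hx Hy. pose proof (rpow_nonneg x a). pose proof (rpow_nonneg y a).
  assert (H2: rpow 2 a = Rpower 2 a) by (apply rpow_pos_eq; lra).
  assert (0 < Rpower 2 a) by apply Rpower_pos.
  destruct (Rle_dec x y).
  - apply Rle_trans with (rpow (2 * y) a). apply rpow_mono; lra.
    rewrite rpow_mult, H2 by lra. nra.
  - apply Rle_trans with (rpow (2 * x) a). apply rpow_mono; lra.
    rewrite rpow_mult, H2 by lra. nra.
Qed.
(** * Logarithms, finite sums and limits of sequences *)

Lemma ln_1p_le t : -1 < t -> ln (1 + t) <= t.
Proof. intros. pose proof (ln_le_sub1 (1+t) ltac:(lra)). lra. Qed.

Lemma ln_1p_ge t : 0 <= t -> t / (1 + t) <= ln (1 + t).
Proof.
  intros Ht. pose proof (ln_le_sub1 (/ (1+t)) ltac:(apply Rinv_0_lt_compat; lra)) as H.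
  rewrite ln_Rinv in H by lra.
  replace (/ (1+t) - 1) with (- (t/(1+t))) in H by (field; lra). lra.
Qed.

Lemma ln_succ_nonneg i : 0 <= ln (INR i + 1).
Proof. pose proof (pos_INR i). rewrite <- ln_1. apply ln_le_mono; lra. Qed.

Lemma ln_succ_pos i : (1 <= i)%nat -> 0 < ln (INR i + 1).
Proof. intros. apply le_INR in H. simpl in H. rewrite <- ln_1. apply ln_increasing; lra. Qed.

Lemma ln_succ_split i n : (n <= i)%nat -> ln (INR i + 1) <= ln (INR (i - n) + 1) + ln (INR n + 1).
Proof.
  intros H. rewrite minus_INR by auto. apply le_INR in H. pose proof (pos_INR n).
  rewrite <- ln_mult by lra. apply ln_le_mono. lra. nra.
Qed.

Lemma ln_unbounded M : exists N, forall i, (N <= i)%nat -> M < ln (INR i + 1).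
Proof.
  destruct (INR_unbounded (exp M)) as [N HN]. exists N. intros i Hi.
  apply le_INR in Hi. rewrite <- (ln_exp M). apply ln_increasing. apply exp_pos. lra.
Qed.

Lemma ln3_ge1 : 1 <= ln 3.
Proof. rewrite <- (ln_exp 1). apply ln_le_mono. apply exp_pos. apply exp_le_3. Qed.

(* ln(i+1) ~ ln i, to pass from target_scale to the normalization of the theorem. *)
Lemma ln_ratio_cv : Un_cv (fun i => ln (INR i + 1) / ln (INR i)) 1.
Proof.
  intros e He. destruct (INR_unbounded (/ e)) as [N HN].
  exists (N + 3)%nat. intros i Hi. unfold Rdist.
  apply le_INR in Hi. rewrite plus_INR in Hi. simpl in Hi. pose proof (pos_INR N).
  assert (Hi3: 3 <= INR i) by lra.
  assert (HL: 1 <= ln (INR i)) by (eapply Rle_trans; [apply ln3_ge1|apply ln_le_mono; lra]).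
  assert (D1: 0 <= ln (INR i + 1) - ln (INR i)).
  { assert (ln (INR i) <= ln (INR i + 1)) by (apply ln_le_mono; lra). lra. }
  assert (D2: ln (INR i + 1) - ln (INR i) <= / INR i).
  { rewrite <- ln_div_pos by lra. replace ((INR i + 1) / INR i) with (1 + / INR i) by (field; lra).
    apply ln_1p_le. assert (0 < / INR i) by (apply Rinv_0_lt_compat; lra). lra. }
  replace (ln (INR i + 1) / ln (INR i) - 1) with ((ln (INR i + 1) - ln (INR i)) / ln (INR i)) by (field; lra).
  rewrite Rabs_right by (apply Rle_ge, Rdiv_nonneg; lra).
  apply Rle_lt_trans with (/ INR i).
  - apply Rle_trans with (ln (INR i + 1) - ln (INR i)). 2: lra.
    unfold Rdiv. rewrite <- (Rmult_1_r (ln (INR i + 1) - ln (INR i))) at 2. apply Rmult_le_compat_l. lra.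
    rewrite <- Rinv_1. apply Rinv_le_contravar; lra.
  - apply Rmult_lt_reg_r with (INR i). lra. rewrite Rinv_l by lra.
    apply Rmult_lt_reg_l with (/ e). apply Rinv_0_lt_compat; lra.
    replace (/ e * (e * INR i)) with (INR i) by (field; lra). lra.
Qed.

Lemma INR_S_pos n : 0 < INR (S n).
Proof. apply lt_0_INR; lia. Qed.

Lemma INR_le_pow2 n : INR n <= 2 ^ n.
Proof.
  induction n. simpl. lra. rewrite S_INR. simpl.
  assert (1 <= 2 ^ n) by (apply pow_R1_Rle; lra). lra.
Qed.

Lemma pow_ge_base K n : 1 <= K -> K <= K ^ (S n).
Proof.
  intros HK. induction n. simpl. lra. simpl in *. nra.
Qed.

Lemma div_le_of_mul_le c g G Rr : 0 < c -> 0 < g -> 0 < G -> 0 < Rr -> g * Rr <= G -> c * g / G <= c / Rr.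
Proof.
  intros. unfold Rdiv. rewrite Rmult_assoc. apply Rmult_le_compat_l. lra.
  apply Rmult_le_reg_r with (G * Rr). nra.
  replace (g * / G * (G * Rr)) with (g * Rr) by (field; lra).
  replace (/ Rr * (G * Rr)) with G by (field; lra). auto.
Qed.

Lemma div_ge_of_mul_ge c g G Rr : 0 < c -> 0 < g -> 0 < G -> 0 < Rr -> G <= g * Rr -> c / Rr <= c * g / G.
Proof.
  intros. unfold Rdiv. rewrite Rmult_assoc. apply Rmult_le_compat_l. lra.
  apply Rmult_le_reg_r with (G * Rr). nra.
  replace (g * / G * (G * Rr)) with (g * Rr) by (field; lra).
  replace (/ Rr * (G * Rr)) with G by (field; lra). auto.
Qed.

Lemma div_close X Dn M e : 0 < Dn -> Rabs (X - M * Dn) < e * Dn -> Rabs (X / Dn - M) < e.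
Proof.
  intros HD H. replace (X / Dn - M) with ((X - M * Dn) / Dn) by (field; lra).
  unfold Rdiv. rewrite Rabs_mult, Rabs_inv, (Rabs_right Dn) by lra.
  apply Rmult_lt_reg_r with Dn; auto. rewrite Rmult_assoc, Rinv_l by lra. lra.
Qed.

Lemma sum_scal_l (f : nat -> R) c N : sum_f_R0 (fun j => c * f j) N = c * sum_f_R0 f N.
Proof. induction N; simpl; [ring|]. rewrite IHN. ring. Qed.

Lemma sum_scal_r (f : nat -> R) c N : sum_f_R0 (fun j => f j * c) N = sum_f_R0 f N * c.
Proof. induction N; simpl; [ring|]. rewrite IHN. ring. Qed.

Lemma sum_zero (f : nat -> R) N : (forall j, (j <= N)%nat -> f j = 0) -> sum_f_R0 f N = 0.
Proof.
  intros H. induction N; simpl. apply H; lia. rewrite IHN, H. ring. lia. intros; apply H; lia.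
Qed.

Lemma sum_nonneg (f : nat -> R) N : (forall j, (j <= N)%nat -> 0 <= f j) -> 0 <= sum_f_R0 f N.
Proof.
  intros H. induction N; simpl. apply H; lia.
  assert (0 <= sum_f_R0 f N) by (apply IHN; intros; apply H; lia).
  specialize (H (S N) ltac:(lia)). lra.
Qed.

Lemma sum_mono_N (f : nat -> R) n N : (forall j, 0 <= f j) -> (n <= N)%nat -> sum_f_R0 f n <= sum_f_R0 f N.
Proof.
  intros H Hn. induction Hn. lra. simpl. specialize (H (S m)). lra.
Qed.

Lemma sum_triangle (g : nat -> nat -> R) i :
  sum_f_R0 (fun z => sum_f_R0 (fun j => g j (z - j)%nat) z) i =
  sum_f_R0 (fun j => sum_f_R0 (fun r => g j r) (i - j)) i.
Proof.
  induction i.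
  - simpl. auto.
  - rewrite tech5, IHi. rewrite (tech5 (fun j => sum_f_R0 (fun r => g j r) (S i - j))).
    rewrite Nat.sub_diag.
    rewrite (sum_eq (fun j => sum_f_R0 (fun r => g j r) (S i - j)%nat)
               (fun j => sum_f_R0 (fun r => g j r) (i - j) + g j (S i - j)%nat) i).
    + rewrite plus_sum. rewrite tech5. rewrite Nat.sub_diag. simpl. ring.
    + intros j Hj. replace (S i - j)%nat with (S (i - j)) by lia. rewrite tech5. auto.
Qed.

Lemma harmonic_upper n : sum_f_R0 (fun j => / (INR j + 1)) n <= 1 + ln (INR n + 1).
Proof.
  induction n.
  - simpl. rewrite Rplus_0_l, Rinv_1, ln_1. lra.
  - rewrite tech5, S_INR. pose proof (pos_INR n).
    assert (/ (INR n + 1 + 1) <= ln (INR n + 1 + 1) - ln (INR n + 1)).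
    { rewrite <- ln_div_pos by lra.
      pose proof (ln_1p_le (- / (INR n + 1 + 1))) as H1.
      assert (0 < / (INR n + 1 + 1)) by (apply Rinv_0_lt_compat; lra).
      assert (/ (INR n + 1 + 1) < 1) by (rewrite <- Rinv_1; apply Rinv_lt_contravar; lra).
      specialize (H1 ltac:(lra)).
      replace (1 + - / (INR n + 1 + 1)) with (/ ((INR n + 1 + 1) / (INR n + 1))) in H1 by (field; lra).
      rewrite ln_Rinv in H1 by (apply Rdiv_lt_0_compat; lra). lra. }
    lra.
Qed.

Lemma harmonic_lower beta n : 0 < beta ->
  ln (INR n + 1 + beta) - ln beta <= sum_f_R0 (fun j => / (INR j + beta)) n.
Proof.
  intros Hb. induction n.
  - simpl. rewrite !Rplus_0_l. rewrite <- ln_div_pos by lra.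
    replace ((1 + beta) / beta) with (1 + / beta) by (field; lra).
    apply ln_1p_le. assert (0 < / beta) by (apply Rinv_0_lt_compat; lra). lra.
  - rewrite tech5, S_INR. pose proof (pos_INR n).
    assert (ln (INR n + 1 + 1 + beta) - ln (INR n + 1 + beta) <= / (INR n + 1 + beta)).
    { rewrite <- ln_div_pos by lra.
      replace ((INR n + 1 + 1 + beta) / (INR n + 1 + beta)) with (1 + / (INR n + 1 + beta)) by (field; lra).
      apply ln_1p_le. assert (0 < / (INR n + 1 + beta)) by (apply Rinv_0_lt_compat; lra). lra. }
    lra.
Qed.

Lemma inv_square_sum beta n : 1 < beta ->
  sum_f_R0 (fun j => / ((INR j + beta) * (INR j + beta))) n <= / (beta - 1).
Proof.
  intros Hb.
  assert (H: forall n, sum_f_R0 (fun j => / ((INR j + beta) * (INR j + beta))) n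
                       <= / (beta - 1) - / (INR n + beta)).
  { induction n0.
    - simpl. rewrite Rplus_0_l.
      replace (/ (beta - 1) - / beta) with (/ ((beta - 1) * beta)) by (field; lra).
      apply Rinv_le_contravar; nra.
    - rewrite tech5, S_INR. pose proof (pos_INR n0).
      assert (/ ((INR n0 + 1 + beta) * (INR n0 + 1 + beta)) <= / (INR n0 + beta) - / (INR n0 + 1 + beta)).
      { replace (/ (INR n0 + beta) - / (INR n0 + 1 + beta)) with (/ ((INR n0 + beta) * (INR n0 + 1 + beta)))
          by (field; lra).
        apply Rinv_le_contravar; nra. }
      lra. }
  eapply Rle_trans. apply H. pose proof (pos_INR n).
  assert (0 < / (INR n + beta)) by (apply Rinv_0_lt_compat; lra). lra.
Qed.

Lemma Un_cv_ext_from (u v : nat -> R) l N :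
  (forall n, (N <= n)%nat -> u n = v n) -> Un_cv v l -> Un_cv u l.
Proof.
  intros He Hv e Hep. destruct (Hv e Hep) as [M HM]. exists (max N M). intros n Hn.
  rewrite He by lia. apply HM; lia.
Qed.

Lemma Un_cv_eq_lim u l l' : Un_cv u l -> l = l' -> Un_cv u l'.
Proof. intros H <-; auto. Qed.

Lemma Un_cv_const c : Un_cv (fun _ => c) c.
Proof. intros e He. exists 0%nat. intros. unfold Rdist. rewrite Rminus_diag, Rabs_R0; auto. Qed.

Lemma inv_cv d : 0 < d -> Un_cv (fun n => / (INR n + d)) 0.
Proof.
  intros Hd e He. destruct (INR_unbounded (/e)) as [N HN]. exists N. intros n Hn.
  unfold Rdist. rewrite Rminus_0_r.
  pose proof (pos_INR n). apply le_INR in Hn.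
  rewrite Rabs_right by (left; apply Rinv_0_lt_compat; lra).
  assert (Hi: / e < INR n + d) by lra.
  apply Rinv_lt_contravar in Hi. rewrite Rinv_inv in Hi. auto.
  apply Rmult_lt_0_compat. apply Rinv_0_lt_compat; auto. lra.
Qed.

Lemma frac_cv c d : 0 < d -> Un_cv (fun n => (INR n + c) / (INR n + d)) 1.
Proof.
  intros Hd. apply Un_cv_ext_from with (v := fun n => 1 + (c - d) * / (INR n + d)) (N := 0%nat).
  - intros n _. pose proof (pos_INR n). field. lra.
  - eapply Un_cv_eq_lim. apply CV_plus. apply Un_cv_const.
    apply CV_mult. apply Un_cv_const. apply inv_cv; auto. ring.
Qed.

Lemma cont_Rpower s y : 0 < y -> continuity_pt (fun z => Rpower z s) y.
Proof.
  intros Hy. apply derivable_continuous_pt. exists (s * Rpower y (s - 1)).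
  apply derivable_pt_lim_power; auto.
Qed.

Lemma inf_sum_ext f g s : (forall n, f n = g n) -> infinite_sum f s -> infinite_sum g s.
Proof.
  intros He Hf e Hep. destruct (Hf e Hep) as [N HN]. exists N. intros n Hn.
  rewrite (sum_eq g f) by (intros; symmetry; apply He). apply HN; auto.
Qed.

Lemma inf_sum_scal f s c : infinite_sum f s -> infinite_sum (fun n => c * f n) (c * s).
Proof.
  intros Hf. unfold infinite_sum. fold (Un_cv (sum_f_R0 (fun n => c * f n)) (c * s)).
  apply Un_cv_ext_from with (N := 0%nat) (v := fun N => c * sum_f_R0 f N).
  - intros n _. clear Hf. induction n; simpl. ring. rewrite IHn. ring.
  - apply CV_mult. apply Un_cv_const. apply Hf.
Qed.

Lemma lim_bound (u : nat -> R) l b i0 : Un_cv u l -> (forall i, (i0 <= i)%nat -> Rabs (u i) <= b) -> Rabs l <= b.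
Proof.
  intros Hu Hb. apply Rle_cv_lim with (Un := fun n => Rabs (u (n + i0)%nat)) (Vn := fun _ => b).
  - intros n. apply Hb. lia.
  - apply cv_cvabs. apply CV_shift'. auto.
  - apply Un_cv_const.
Qed.

Lemma finite_sum_cv (w : nat -> nat -> R) (L : nat -> R) M :
  (forall m, Un_cv (fun i => w i m) (L m)) -> Un_cv (fun i => sum_f_R0 (w i) M) (sum_f_R0 L M).
Proof.
  intros H. induction M.
  - simpl. apply H.
  - simpl. apply CV_plus; auto.
Qed.

Lemma tail_bound (f B : nat -> R) s sb M :
  infinite_sum f s -> infinite_sum B sb -> (forall m, Rabs (f m) <= B m) ->
  Rabs (s - sum_f_R0 f M) <= sb - sum_f_R0 B M.
Proof.
  intros Hf HB Hle.
  assert (HB0: forall m, 0 <= B m) by (intro m; pose proof (Hle m); pose proof (Rabs_pos (f m)); lra).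
  assert (Hst: forall N, Rabs (sum_f_R0 f (N + M) - sum_f_R0 f M) <= sum_f_R0 B (N + M) - sum_f_R0 B M).
  { induction N.
    - simpl. rewrite Rminus_diag, Rabs_R0. lra.
    - replace (S N + M)%nat with (S (N + M)) by lia. rewrite !tech5.
      replace (sum_f_R0 f (N + M) + f (S (N + M)) - sum_f_R0 f M)
        with ((sum_f_R0 f (N + M) - sum_f_R0 f M) + f (S (N + M))) by ring.
      eapply Rle_trans. apply Rabs_triang. pose proof (Hle (S (N + M))). lra. }
  apply Rle_cv_lim with (Un := fun N => Rabs (sum_f_R0 f (N + M) - sum_f_R0 f M))
                        (Vn := fun N => sb - sum_f_R0 B M).
  - intros N. eapply Rle_trans. apply Hst. pose proof (sum_incr B (N + M) sb HB HB0). lra.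
  - apply cv_cvabs. apply CV_minus. apply CV_shift'. auto. apply Un_cv_const.
  - apply Un_cv_const.
Qed.

Lemma tannery (w : nat -> nat -> R) (L B Y : nat -> R) SL SB i0 :
  (forall m, Un_cv (fun i => w i m) (L m)) ->
  (forall i m, (i0 <= i)%nat -> Rabs (w i m) <= B m) ->
  infinite_sum B SB -> infinite_sum L SL ->
  (forall i, (i0 <= i)%nat -> infinite_sum (w i) (Y i)) ->
  Un_cv Y SL.
Proof.
  intros Hw Hb HB HL HS e He.
  assert (HLb: forall m, Rabs (L m) <= B m) by (intro m; apply (lim_bound _ _ _ i0 (Hw m)); intros; apply Hb; auto).
  destruct (HB (e/3) ltac:(lra)) as [M HM]. specialize (HM M (le_n _)). unfold Rdist in HM.
  assert (Ht: SB - sum_f_R0 B M < e/3) by (apply Rabs_def2 in HM; lra).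
  destruct (finite_sum_cv w L M Hw (e/3) ltac:(lra)) as [N HN].
  exists (i0 + N)%nat. intros i Hi. unfold Rdist.
  pose proof (tail_bound (w i) B (Y i) SB M (HS i ltac:(lia)) HB (fun m => Hb i m ltac:(lia))).
  pose proof (tail_bound L B SL SB M HL HB HLb).
  specialize (HN i ltac:(lia)). unfold Rdist in HN.
  replace (Y i - SL) with ((Y i - sum_f_R0 (w i) M) + (sum_f_R0 (w i) M - sum_f_R0 L M) - (SL - sum_f_R0 L M))
    by ring.
  eapply Rle_lt_trans. apply Rabs_triang. rewrite Rabs_Ropp.
  eapply Rle_lt_trans. apply Rplus_le_compat_r. apply Rabs_triang. lra.
Qed.

(** * The Gamma function *)

Lemma rising_pos x n : 0 < x -> 0 < rising_prod x n.
Proof.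
  intros Hx. induction n; cbn [rising_prod]; auto.
  apply Rmult_lt_0_compat; auto. pose proof (pos_INR (S n)). lra.
Qed.

(* Writing n! / (x (x+1)...(x+n)) as exp of a sum of logarithmic terms, and the
   Gauss sequence as exp of a series whose terms gauss_lterm are O(1/j^2). *)
Definition gauss_dterm (x : R) (j : nat) : R := ln (INR (S j)) - ln (x + INR (S j)).

Lemma fact_div_rising x n : 0 < x ->
  INR (Factorial.fact (S n)) / rising_prod x (S n) = exp (sum_f_R0 (gauss_dterm x) n) / x.
Proof.
  intros Hx. induction n.
  - simpl sum_f_R0. unfold gauss_dterm. simpl rising_prod. simpl INR. rewrite ln_1.
    unfold Rminus. rewrite Rplus_0_l, exp_Ropp, exp_ln by lra. field. split; lra.
  - rewrite tech5.
    change (rising_prod x (S (S n))) with (rising_prod x (S n) * (x + INR (S (S n)))).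
    change (Factorial.fact (S (S n))) with ((S (S n)) * Factorial.fact (S n))%nat.
    rewrite mult_INR.
    rewrite exp_plus. unfold gauss_dterm at 2. unfold Rminus.
    rewrite exp_plus, exp_ln by (apply INR_S_pos).
    rewrite exp_Ropp, exp_ln by (pose proof (INR_S_pos (S n)); lra).
    assert (HR := rising_pos x (S n) Hx).
    pose proof (INR_S_pos (S n)).
    replace (INR (S (S n)) * INR (Factorial.fact (S n)) / (rising_prod x (S n) * (x + INR (S (S n)))))
      with ((INR (Factorial.fact (S n)) / rising_prod x (S n)) * (INR (S (S n)) / (x + INR (S (S n)))))
      by (field; split; lra).
    rewrite IHn. field. split; lra.
Qed.

Lemma gauss_seq_S x n : 0 < x ->
  gauss_seq x (S n) = exp (x * ln (INR (S n)) + sum_f_R0 (gauss_dterm x) n) / x.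
Proof.
  intros Hx. unfold gauss_seq.
  unfold Rdiv at 1. rewrite Rmult_assoc. fold (Rdiv (INR (Factorial.fact (S n))) (rising_prod x (S n))).
  rewrite fact_div_rising by auto. unfold Rpower. rewrite exp_plus. unfold Rdiv. ring.
Qed.

Definition gauss_lterm (x : R) (j : nat) : R :=
  x * (ln (INR (S (S j))) - ln (INR (S j))) + gauss_dterm x (S j).

Lemma gauss_exponent_shift x n :
  x * ln (INR (S (S n))) + sum_f_R0 (gauss_dterm x) (S n) = gauss_dterm x 0 + sum_f_R0 (gauss_lterm x) n.
Proof.
  induction n.
  - simpl. unfold gauss_lterm. simpl. rewrite ln_1. ring.
  - rewrite tech5. rewrite (tech5 (gauss_lterm x)).
    rewrite <- (Rplus_assoc (gauss_dterm x 0)), <- IHn. unfold gauss_lterm. ring.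
Qed.

Lemma gauss_lterm_bounds x j : 0 < x ->
  0 <= gauss_lterm x j <= x * (1 + x) * (/ INR (S j) - / INR (S (S j))).
Proof.
  intros Hx. unfold gauss_lterm, gauss_dterm.
  set (K := INR (S j)).
  assert (HK : 1 <= K) by (unfold K; rewrite S_INR; pose proof (pos_INR j); lra).
  assert (E1: INR (S (S j)) = K + 1) by (unfold K; rewrite (S_INR (S j)); auto).
  rewrite E1.
  assert (A1: ln (K+1) - ln K = ln (1 + /K)).
  { rewrite <- ln_div_pos by lra. f_equal. field. lra. }
  assert (A2: ln (K+1) - ln (x + (K+1)) = - ln (1 + x/(K+1))).
  { replace (x + (K+1)) with ((K+1) * (1 + x/(K+1))) by (field; lra).
    rewrite ln_mult; try lra. assert (0 <= x/(K+1)) by (apply Rdiv_nonneg; lra). lra. }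
  rewrite A1, A2.
  assert (P1: 0 < /K) by (apply Rinv_0_lt_compat; lra).
  assert (P2: 0 <= x/(K+1)) by (apply Rdiv_nonneg; lra).
  pose proof (ln_1p_le (/K) ltac:(lra)) as U1.
  pose proof (ln_1p_ge (/K) ltac:(lra)) as L1.
  pose proof (ln_1p_le (x/(K+1)) ltac:(lra)) as U2.
  pose proof (ln_1p_ge (x/(K+1)) ltac:(lra)) as L2.
  replace (/K / (1 + /K)) with (/(K+1)) in L1 by (field; lra).
  replace (x / (K+1) / (1 + x/(K+1))) with (x / (K+1+x)) in L2 by (field; lra).
  split.
  - assert (x * / (K+1) <= x * ln (1 + /K)) by (apply Rmult_le_compat_l; lra).
    assert (x * / (K+1) = x / (K+1)) by (unfold Rdiv; ring). lra.
  - assert (x * ln (1 + /K) <= x * /K) by (apply Rmult_le_compat_l; lra).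
    assert (x * / K - x / (K+1+x) <= x * (1+x) * (/K - /(K+1))).
    { replace (x * / K - x / (K+1+x)) with (x * (1+x) / (K * (K+1+x))) by (field; lra).
      replace (x * (1+x) * (/K - /(K+1))) with (x * (1+x) / (K * (K+1))) by (field; lra).
      unfold Rdiv. apply Rmult_le_compat_l. nra.
      apply Rinv_le_contravar; nra. }
    lra.
Qed.

Lemma gauss_lsum_bound x n : 0 < x -> sum_f_R0 (gauss_lterm x) n <= x * (1 + x) * (1 - / INR (S (S n))).
Proof.
  intros Hx. induction n.
  - simpl. pose proof (gauss_lterm_bounds x 0 Hx). simpl in H. rewrite Rinv_1 in H. simpl. lra.
  - rewrite tech5. pose proof (gauss_lterm_bounds x (S n) Hx). lra.
Qed.

Lemma gauss_lsum_cv x : 0 < x -> { s | Un_cv (sum_f_R0 (gauss_lterm x)) s }.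
Proof.
  intros Hx. apply growing_cv.
  - intro n. rewrite tech5. pose proof (gauss_lterm_bounds x (S n) Hx). lra.
  - exists (x * (1 + x)). intros y [n ->].
    pose proof (gauss_lsum_bound x n Hx).
    assert (0 < / INR (S (S n))) by (apply Rinv_0_lt_compat; apply INR_S_pos).
    assert (0 < x * (1+x)) by nra. nra.
Qed.

Lemma gauss_seq_cv x : 0 < x -> exists l, Un_cv (gauss_seq x) l /\ 0 < l.
Proof.
  intros Hx. destruct (gauss_lsum_cv x Hx) as [s Hs].
  exists (exp (gauss_dterm x 0 + s) / x). split.
  - apply CV_shift with 2%nat.
    assert (H: Un_cv (fun n => exp (gauss_dterm x 0 + sum_f_R0 (gauss_lterm x) n) / x) (exp (gauss_dterm x 0 + s) / x)).
    { unfold Rdiv. apply CV_mult.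
      - apply continuity_seq with (f := exp).
        + apply derivable_continuous_pt. apply derivable_pt_exp.
        + intros e He. destruct (Hs e He) as [N HN]. exists N. intros n Hn.
          unfold Rdist. replace (gauss_dterm x 0 + sum_f_R0 (gauss_lterm x) n - (gauss_dterm x 0 + s))
            with (sum_f_R0 (gauss_lterm x) n - s) by ring. apply HN; auto.
      - intros e He. exists 0%nat. intros. unfold Rdist. rewrite Rminus_diag, Rabs_R0; auto. }
    intros e He. destruct (H e He) as [N HN]. exists N. intros n Hn.
    replace (n + 2)%nat with (S (S n)) by lia.
    rewrite gauss_seq_S, gauss_exponent_shift by auto. apply HN; auto.
  - apply Rdiv_lt_0_compat; auto. apply exp_pos.
Qed.

Lemma Gamma_spec x : 0 < x -> Un_cv (gauss_seq x) (Gamma x) /\ 0 < Gamma x.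
Proof.
  intros Hx. destruct (gauss_seq_cv x Hx) as [l [Hl Hp]].
  assert (HG : Un_cv (gauss_seq x) (Gamma x)).
  { unfold Gamma. apply epsilon_spec. exists l; auto. }
  split; auto. rewrite (UL_sequence _ _ _ HG Hl). auto.
Qed.

Lemma Gamma_pos x : 0 < x -> 0 < Gamma x.
Proof. intros. apply Gamma_spec; auto. Qed.

Lemma Gamma_arg x y : x = y -> Gamma x = Gamma y.
Proof. intros ->; auto. Qed.

(* The functional equation Gamma (x+1) = x Gamma x, from a shift in the Gauss sequence. *)
Lemma rising_shift x n : rising_prod x (S n) = x * rising_prod (x + 1) n.
Proof.
  induction n.
  - simpl. ring.
  - change (rising_prod x (S (S n))) with (rising_prod x (S n) * (x + INR (S (S n)))).
    rewrite IHn. cbn [rising_prod]. rewrite (S_INR (S n)). ring.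
Qed.

Lemma gauss_succ x n : 0 < x -> (1 <= n)%nat ->
  gauss_seq (x + 1) n = gauss_seq x n * (x * (INR n / (INR n + (x + 1)))).
Proof.
  intros Hx Hn. unfold gauss_seq.
  assert (Hn' : 0 < INR n) by (apply lt_0_INR; lia).
  rewrite Rpower_plus, Rpower_1 by auto.
  pose proof (rising_shift x n) as E. cbn [rising_prod] in E.
  assert (Hr: 0 < rising_prod (x+1) n) by (apply rising_pos; lra).
  assert (Hr2: 0 < rising_prod x n) by (apply rising_pos; lra).
  assert (E2: rising_prod (x+1) n = rising_prod x n * (x + INR (S n)) / x).
  { apply Rmult_eq_reg_l with x; [|lra]. rewrite <- E. field. lra. }
  rewrite E2. rewrite S_INR. field. repeat split; lra.
Qed.

Lemma Gamma_succ x : 0 < x -> Gamma (x + 1) = x * Gamma x.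
Proof.
  intros Hx. destruct (Gamma_spec x Hx) as [H1 _].
  destruct (Gamma_spec (x+1) ltac:(lra)) as [H2 _].
  apply UL_sequence with (gauss_seq (x+1)); auto.
  apply Un_cv_ext_from with (N := 1%nat)
    (v := fun n => gauss_seq x n * (x * ((INR n + 0) / (INR n + (x+1))))).
  - intros n Hn. rewrite gauss_succ by auto. rewrite Rplus_0_r; auto.
  - eapply Un_cv_eq_lim.
    apply CV_mult; [apply H1|]. apply CV_mult. apply Un_cv_const. apply frac_cv. lra. ring.
Qed.

(* Gamma_succ in a form that matches arbitrary spellings of the argument. *)
Lemma Gamma_succ_eq x y : 0 < x -> y = x + 1 -> Gamma y = x * Gamma x.
Proof. intros. subst. apply Gamma_succ; auto. Qed.

Lemma rising_one n : rising_prod 1 n = INR (Factorial.fact (S n)).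
Proof.
  induction n.
  - simpl. ring.
  - cbn [rising_prod]. rewrite IHn.
    change (Factorial.fact (S (S n))) with ((S (S n)) * Factorial.fact (S n))%nat.
    rewrite mult_INR. rewrite (S_INR (S n)). ring.
Qed.

Lemma Gamma_1 : Gamma 1 = 1.
Proof.
  destruct (Gamma_spec 1 ltac:(lra)) as [H1 _].
  apply UL_sequence with (gauss_seq 1); auto.
  apply Un_cv_ext_from with (N := 1%nat) (v := fun n => (INR n + 0) / (INR n + 1)).
  - intros n Hn. unfold gauss_seq. rewrite Rpower_1 by (apply lt_0_INR; lia).
    rewrite rising_one. change (Factorial.fact (S n)) with ((S n) * Factorial.fact n)%nat.
    rewrite mult_INR, S_INR. pose proof (INR_fact_lt_0 n). pose proof (pos_INR n). field. lra.
  - apply frac_cv. lra.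
Qed.

Lemma Gamma_2 : Gamma 2 = 1.
Proof. replace 2 with (1 + 1) by ring. rewrite Gamma_succ, Gamma_1 by lra. ring. Qed.

(* One-factor versions of the Gamma ratio bounds, from Bernoulli's inequality. *)
Lemma factor_lower s y : 1 <= s -> 0 < y -> Rpower (y / (y + 1)) s <= y / (y + s).
Proof.
  intros Hs Hy.
  pose proof (Rpower_bernoulli s ((y+1)/y) Hs ltac:(apply Rdiv_lt_0_compat; lra)) as B.
  replace (1 + s * ((y+1)/y - 1)) with ((y+s)/y) in B by (field; lra).
  assert (Hp: Rpower (y/(y+1)) s * Rpower ((y+1)/y) s = 1).
  { rewrite Rpower_mult_distr by (apply Rdiv_lt_0_compat; lra).
    replace (y / (y+1) * ((y+1)/y)) with 1 by (field; lra). apply Rpower_1_base. }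
  pose proof (Rpower_pos (y/(y+1)) s).
  assert (0 < (y+s)/y) by (apply Rdiv_lt_0_compat; lra).
  replace (y/(y+s)) with (/ ((y+s)/y)) by (field; lra).
  apply Rmult_le_reg_r with ((y+s)/y); auto. rewrite Rinv_l by lra. nra.
Qed.

Lemma factor_upper s y : 1 <= s -> 0 < y -> y / (y + s) <= Rpower ((y + s - 1) / (y + s)) s.
Proof.
  intros Hs Hy.
  pose proof (Rpower_bernoulli s ((y+s-1)/(y+s)) Hs ltac:(apply Rdiv_lt_0_compat; lra)) as B.
  replace (1 + s * ((y+s-1)/(y+s) - 1)) with (y/(y+s)) in B by (field; lra). auto.
Qed.

Lemma rising_ratio_lower x s n : 1 <= s -> 0 < x ->
  Rpower (x / (x + INR n + 1)) s <= rising_prod x n / rising_prod (x + s) n.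
Proof.
  intros Hs Hx. induction n.
  - simpl. rewrite Rplus_0_r. apply factor_lower; auto.
  - cbn [rising_prod]. rewrite S_INR.
    pose proof (pos_INR n).
    assert (Hr1 := rising_pos x n Hx). assert (Hr2 := rising_pos (x+s) n ltac:(lra)).
    replace (rising_prod x n * (x + (INR n + 1)) / (rising_prod (x + s) n * (x + s + (INR n + 1))))
      with (rising_prod x n / rising_prod (x + s) n * ((x + INR n + 1) / (x + INR n + 1 + s)))
      by (field; lra).
    replace (x / (x + (INR n + 1) + 1)) with ((x / (x + INR n + 1)) * ((x + INR n + 1) / (x + INR n + 1 + 1)))
      by (field; lra).
    rewrite <- Rpower_mult_distr by (apply Rdiv_lt_0_compat; lra).
    apply Rmult_le_compat; try (left; apply Rpower_pos); auto.
    apply factor_lower; auto. lra.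
Qed.

Lemma rising_ratio_upper x s n : 1 <= s -> 0 < x ->
  rising_prod x n / rising_prod (x + s) n <= Rpower ((x + s - 1) / (x + s + INR n)) s.
Proof.
  intros Hs Hx. induction n.
  - simpl. rewrite Rplus_0_r. apply factor_upper; auto.
  - cbn [rising_prod]. rewrite S_INR.
    pose proof (pos_INR n).
    assert (Hr1 := rising_pos x n Hx). assert (Hr2 := rising_pos (x+s) n ltac:(lra)).
    replace (rising_prod x n * (x + (INR n + 1)) / (rising_prod (x + s) n * (x + s + (INR n + 1))))
      with (rising_prod x n / rising_prod (x + s) n * ((x + INR n + 1) / (x + INR n + 1 + s)))
      by (field; lra).
    replace ((x + s - 1) / (x + s + (INR n + 1))) with
      (((x + s - 1) / (x + s + INR n)) * ((x + INR n + 1 + s - 1) / (x + INR n + 1 + s)))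
      by (field; lra).
    rewrite <- Rpower_mult_distr by (apply Rdiv_lt_0_compat; lra).
    apply Rmult_le_compat; auto.
    apply Rdiv_nonneg; [left; apply rising_pos | apply rising_pos]; lra.
    left; apply Rdiv_lt_0_compat; lra.
    apply factor_upper; auto. lra.
Qed.

Lemma gauss_pos x n : 0 < x -> (1 <= n)%nat -> 0 < gauss_seq x n.
Proof.
  intros Hx Hn. unfold gauss_seq. apply Rdiv_lt_0_compat. apply Rmult_lt_0_compat.
  apply Rpower_pos. apply INR_fact_lt_0. apply rising_pos; auto.
Qed.

Lemma gauss_ratio x s n : 0 < x -> 0 <= s -> (1 <= n)%nat ->
  gauss_seq (x + s) n = gauss_seq x n * (Rpower (INR n) s * (rising_prod x n / rising_prod (x + s) n)).
Proof.
  intros Hx Hs Hn. unfold gauss_seq. rewrite Rpower_plus.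
  assert (Hr1 := rising_pos x n Hx).
  assert (Hr2 := rising_pos (x + s) n ltac:(lra)).
  field. lra.
Qed.

Lemma Gamma_ratio_lower x s : 0 < x -> 1 <= s -> Gamma x * Rpower x s <= Gamma (x + s).
Proof.
  intros Hx Hs.
  destruct (Gamma_spec x Hx) as [Gx _]. destruct (Gamma_spec (x+s) ltac:(lra)) as [Gxs _].
  apply Rle_cv_lim with
    (Un := fun n => gauss_seq x (n+1) * Rpower (x * ((INR n + 1) / (INR n + (x + 2)))) s)
    (Vn := fun n => gauss_seq (x + s) (n + 1)).
  - intro n. rewrite gauss_ratio by (auto; lra || lia).
    assert (HN: INR (n+1) = INR n + 1) by (rewrite plus_INR; simpl; ring).
    pose proof (pos_INR n).
    apply Rmult_le_compat_l. left; apply gauss_pos; auto; lia.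
    rewrite HN.
    replace (x * ((INR n + 1) / (INR n + (x + 2)))) with ((INR n + 1) * (x / (x + (INR n + 1) + 1)))
      by (field; lra).
    rewrite <- Rpower_mult_distr by (try apply Rdiv_lt_0_compat; lra).
    apply Rmult_le_compat_l. left; apply Rpower_pos.
    rewrite <- HN. apply rising_ratio_lower; auto.
  - apply CV_mult. apply CV_shift'. auto.
    apply continuity_seq with (f := fun z => Rpower z s). apply cont_Rpower; auto.
    eapply Un_cv_eq_lim. apply CV_mult. apply Un_cv_const. apply frac_cv. lra. ring.
  - apply CV_shift'. auto.
Qed.

Lemma Gamma_ratio_upper x s : 0 < x -> 1 <= s -> Gamma (x + s) <= Gamma x * Rpower (x + s - 1) s.
Proof.
  intros Hx Hs.
  destruct (Gamma_spec x Hx) as [Gx _]. destruct (Gamma_spec (x+s) ltac:(lra)) as [Gxs _].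
  apply Rle_cv_lim with
    (Vn := fun n => gauss_seq x (n+1) * Rpower ((x + s - 1) * ((INR n + 1) / (INR n + (x + s + 1)))) s)
    (Un := fun n => gauss_seq (x + s) (n + 1)).
  - intro n. rewrite gauss_ratio by (auto; lra || lia).
    assert (HN: INR (n+1) = INR n + 1) by (rewrite plus_INR; simpl; ring).
    pose proof (pos_INR n).
    apply Rmult_le_compat_l. left; apply gauss_pos; auto; lia.
    rewrite HN.
    replace ((x + s - 1) * ((INR n + 1) / (INR n + (x + s + 1)))) with
      ((INR n + 1) * ((x + s - 1) / (x + s + (INR n + 1)))) by (field; lra).
    rewrite <- Rpower_mult_distr by (try apply Rdiv_lt_0_compat; lra).
    apply Rmult_le_compat_l. left; apply Rpower_pos.
    rewrite <- HN. apply rising_ratio_upper; auto.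
  - apply CV_shift'. auto.
  - apply CV_mult. apply CV_shift'. auto.
    apply continuity_seq with (f := fun z => Rpower z s). apply cont_Rpower; lra.
    eapply Un_cv_eq_lim. apply CV_mult. apply Un_cv_const. apply frac_cv. lra. ring.
Qed.

(** * The law of T *)

(* The tail constant c = (1+a) Gamma(2+a): P(T = j) ~ c j^(-2-a). *)
Definition tail_const (a : R) : R := (1 + a) * Gamma (2 + a).

Lemma tail_const_pos a : 0 < a -> 0 < tail_const a.
Proof. intros. unfold tail_const. apply Rmult_lt_0_compat. lra. apply Gamma_pos. lra. Qed.

Lemma pT_eq a j : pT a j = tail_const a * Gamma (INR j + 1) / Gamma (INR j + 1 + (2 + a)).
Proof. unfold pT, tail_const. f_equal. apply Gamma_arg. ring. Qed.

Lemma pT_pos a j : 0 < a -> 0 < pT a j.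
Proof.
  intros Ha. rewrite pT_eq. pose proof (pos_INR j).
  apply Rdiv_lt_0_compat. apply Rmult_lt_0_compat. apply tail_const_pos; auto. apply Gamma_pos; lra.
  apply Gamma_pos; lra.
Qed.

Lemma pT_upper a j : 0 < a -> pT a j <= tail_const a / rpow (INR j + 1) (2 + a).
Proof.
  intros Ha. rewrite pT_eq. pose proof (pos_INR j).
  rewrite rpow_pos_eq by lra.
  apply div_le_of_mul_le; try apply Gamma_pos; try apply tail_const_pos; try apply Rpower_pos; try lra.
  apply Gamma_ratio_lower; lra.
Qed.

Lemma pT_lower a j : 0 < a -> tail_const a / rpow (INR j + (2 + a)) (2 + a) <= pT a j.
Proof.
  intros Ha. rewrite pT_eq. pose proof (pos_INR j).
  rewrite rpow_pos_eq by lra.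
  apply div_ge_of_mul_ge; try apply Gamma_pos; try apply tail_const_pos; try apply Rpower_pos; try lra.
  replace (INR j + (2 + a)) with (INR j + 1 + (2 + a) - 1) by ring.
  apply Gamma_ratio_upper; lra.
Qed.

(* P(T = j) telescopes: P(T = j) = Gamma(2+a) (t_j - t_(j+1)) with t_j = Gamma(j+1)/Gamma(j+2+a). *)
Definition pT_tail (a : R) (j : nat) : R := Gamma (INR j + 1) / Gamma (INR j + 2 + a).

Lemma pT_telescope a j : 0 < a -> pT a j = Gamma (2 + a) * (pT_tail a j - pT_tail a (S j)).
Proof.
  intros Ha. unfold pT, pT_tail. rewrite S_INR. pose proof (pos_INR j).
  rewrite (Gamma_succ_eq (INR j + 1) (INR j + 1 + 1)) by lra.
  rewrite (Gamma_succ_eq (INR j + 2 + a) (INR j + 1 + 2 + a)) by lra.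
  rewrite (Gamma_succ_eq (INR j + 2 + a) (3 + a + INR j)) by lra.
  pose proof (Gamma_pos (INR j + 1) ltac:(lra)).
  pose proof (Gamma_pos (INR j + 2 + a) ltac:(lra)).
  field. lra.
Qed.

Lemma pT_tail_pos a j : 0 < a -> 0 < pT_tail a j.
Proof. intros. unfold pT_tail. pose proof (pos_INR j). apply Rdiv_lt_0_compat; apply Gamma_pos; lra. Qed.

Lemma pT_tail_0 a : 0 < a -> pT_tail a 0 = / Gamma (2 + a).
Proof.
  intros. unfold pT_tail. simpl INR. rewrite Rplus_0_l, Gamma_1.
  replace (0 + 2 + a) with (2 + a) by ring. unfold Rdiv. ring.
Qed.

Lemma pT_psum_eq a N : 0 < a -> sum_f_R0 (pT a) N = 1 - Gamma (2 + a) * pT_tail a (S N).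
Proof.
  intros Ha. induction N.
  - simpl sum_f_R0. rewrite pT_telescope, pT_tail_0 by auto.
    pose proof (Gamma_pos (2 + a) ltac:(lra)). field. lra.
  - rewrite tech5, IHN, pT_telescope by auto. ring.
Qed.

Lemma pT_psum_le1 a N : 0 < a -> sum_f_R0 (pT a) N <= 1.
Proof.
  intros. rewrite pT_psum_eq by auto. pose proof (pT_tail_pos a (S N) H).
  pose proof (Gamma_pos (2+a) ltac:(lra)). nra.
Qed.

Lemma pT_tail_bound a j : 0 < a -> pT_tail a j <= / (INR j + 1).
Proof.
  intros Ha. unfold pT_tail. pose proof (pos_INR j).
  pose proof (Gamma_pos (INR j + 1) ltac:(lra)).
  pose proof (Gamma_ratio_lower (INR j + 1) (1 + a) ltac:(lra) ltac:(lra)) as H1.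
  replace (INR j + 1 + (1 + a)) with (INR j + 2 + a) in H1 by ring.
  assert (H2: INR j + 1 <= Rpower (INR j + 1) (1 + a)).
  { rewrite <- (Rpower_1 (INR j + 1)) at 1 by lra. apply Rle_Rpower; lra. }
  assert (H3: Gamma (INR j + 1) * (INR j + 1) <= Gamma (INR j + 2 + a)).
  { eapply Rle_trans; [|apply H1]. apply Rmult_le_compat_l; lra. }
  pose proof (Gamma_pos (INR j + 2 + a) ltac:(lra)).
  apply Rmult_le_reg_r with (Gamma (INR j + 2 + a) * (INR j + 1)). nra.
  replace (Gamma (INR j + 1) / Gamma (INR j + 2 + a) * (Gamma (INR j + 2 + a) * (INR j + 1)))
    with (Gamma (INR j + 1) * (INR j + 1)) by (field; lra).
  replace (/ (INR j + 1) * (Gamma (INR j + 2 + a) * (INR j + 1))) with (Gamma (INR j + 2 + a))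
    by (field; lra). auto.
Qed.

Lemma pT_psum_ge a N : 0 < a -> 1 - Gamma (2 + a) / (INR N + 2) <= sum_f_R0 (pT a) N.
Proof.
  intros Ha. rewrite pT_psum_eq by auto. pose proof (pT_tail_bound a (S N) Ha).
  rewrite S_INR in H. pose proof (pos_INR N).
  pose proof (Gamma_pos (2+a) ltac:(lra)).
  replace (INR N + 1 + 1) with (INR N + 2) in H by ring.
  assert (Gamma (2 + a) * pT_tail a (S N) <= Gamma (2 + a) * / (INR N + 2)) by (apply Rmult_le_compat_l; lra).
  unfold Rdiv. lra.
Qed.

Lemma pT_psum_cv a : 0 < a -> Un_cv (sum_f_R0 (pT a)) 1.
Proof.
  intros Ha e He.
  pose proof (Gamma_pos (2+a) ltac:(lra)) as HG.
  destruct (INR_unbounded (Gamma (2 + a) / e)) as [N HN]. exists N. intros n Hn.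
  unfold Rdist. pose proof (pT_psum_le1 a n Ha). pose proof (pT_psum_ge a n Ha).
  apply le_INR in Hn.
  rewrite Rabs_left1 by lra.
  assert (Gamma (2 + a) / (INR n + 2) < e).
  { apply Rmult_lt_reg_r with (INR n + 2). pose proof (pos_INR n); lra.
    unfold Rdiv. rewrite Rmult_assoc, Rinv_l by (pose proof (pos_INR n); lra).
    assert (Gamma (2+a) < e * INR N).
    { apply Rmult_lt_reg_r with (/e). apply Rinv_0_lt_compat; auto.
      replace (e * INR N * / e) with (INR N) by (field; lra). unfold Rdiv in HN. lra. }
    nra. }
  lra.
Qed.

Lemma pT_psum_large a d : 0 < a -> 0 < d -> exists N, forall n, (N <= n)%nat -> 1 - d <= sum_f_R0 (pT a) n.
Proof.
  intros Ha Hd. destruct (pT_psum_cv a Ha d Hd) as [N HN]. exists N. intros n Hn.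
  specialize (HN n Hn). unfold Rdist in HN. apply Rabs_def2 in HN. lra.
Qed.

(* The mean of T is finite: j P(T = j) telescopes against Gamma(j+2)/Gamma(j+2+a). *)
Definition mean_tail (a : R) (j : nat) : R := Gamma (INR j + 2) / Gamma (INR j + 2 + a).

Lemma pT_mean_term a j : 0 < a -> INR j * pT a j <= tail_const a / a * (mean_tail a j - mean_tail a (S j)).
Proof.
  intros Ha. unfold mean_tail. rewrite pT_eq. rewrite S_INR. pose proof (pos_INR j).
  rewrite (Gamma_succ_eq (INR j + 1) (INR j + 2)) by lra.
  rewrite (Gamma_succ_eq (INR j + 1 + 1) (INR j + 1 + 2)) by lra.
  rewrite (Gamma_succ_eq (INR j + 2 + a) (INR j + 1 + 2 + a)) by lra.
  rewrite (Gamma_succ_eq (INR j + 2 + a) (INR j + 1 + (2 + a))) by lra.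
  rewrite (Gamma_succ_eq (INR j + 1) (INR j + 1 + 1)) by lra.
  pose proof (Gamma_pos (INR j + 1) ltac:(lra)).
  pose proof (Gamma_pos (INR j + 2 + a) ltac:(lra)).
  pose proof (tail_const_pos a Ha).
  replace (tail_const a / a * ((INR j + 1) * Gamma (INR j + 1) / Gamma (INR j + 2 + a) -
      (INR j + 1 + 1) * ((INR j + 1) * Gamma (INR j + 1)) / ((INR j + 2 + a) * Gamma (INR j + 2 + a))))
    with (tail_const a * ((INR j + 1) * Gamma (INR j + 1)) / ((INR j + 2 + a) * Gamma (INR j + 2 + a)))
    by (field; lra).
  replace (INR j * (tail_const a * Gamma (INR j + 1) / ((INR j + 2 + a) * Gamma (INR j + 2 + a))))
    with (tail_const a * (INR j * Gamma (INR j + 1)) / ((INR j + 2 + a) * Gamma (INR j + 2 + a)))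
    by (field; lra).
  unfold Rdiv. apply Rmult_le_compat_r. left; apply Rinv_0_lt_compat; nra.
  apply Rmult_le_compat_l; nra.
Qed.

Lemma mean_tail_pos a j : 0 < a -> 0 < mean_tail a j.
Proof. intros. unfold mean_tail. pose proof (pos_INR j). apply Rdiv_lt_0_compat; apply Gamma_pos; lra. Qed.

Definition mean_bound (a : R) : R := (1 + a) / a.

Lemma mean_bound_pos a : 0 < a -> 0 < mean_bound a.
Proof. intros. unfold mean_bound. apply Rdiv_lt_0_compat; lra. Qed.

Lemma pT_mean_le a N : 0 < a -> sum_f_R0 (fun j => INR j * pT a j) N <= mean_bound a.
Proof.
  intros Ha.
  assert (H: forall N, sum_f_R0 (fun j => INR j * pT a j) N <= tail_const a / a * (mean_tail a 0 - mean_tail a (S N))).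
  { induction N0.
    - simpl sum_f_R0. exact (pT_mean_term a 0 Ha).
    - rewrite tech5. pose proof (pT_mean_term a (S N0) Ha). lra. }
  eapply Rle_trans. apply H.
  pose proof (mean_tail_pos a (S N) Ha).
  assert (0 < tail_const a / a) by (apply Rdiv_lt_0_compat; [apply tail_const_pos|]; auto).
  assert (E: tail_const a / a * mean_tail a 0 = mean_bound a).
  { unfold mean_tail, tail_const, mean_bound. simpl INR. rewrite Rplus_0_l. rewrite Gamma_2.
    replace (0 + 2 + a) with (2 + a) by ring.
    pose proof (Gamma_pos (2+a) ltac:(lra)). field. split; lra. }
  nra.
Qed.

Definition amom_bound (a : R) : R := 2 * tail_const a.

Lemma amom_bound_pos a : 0 < a -> 0 < amom_bound a.
Proof. intros. unfold amom_bound. pose proof (tail_const_pos a H). lra. Qed.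

Lemma pT_amom_term a j : 0 < a -> rpow (INR j) a * pT a j <= 2 * tail_const a * (/ (INR j + 1) - / (INR j + 2)).
Proof.
  intros Ha. pose proof (pos_INR j).
  pose proof (pT_upper a j Ha).
  pose proof (pT_pos a j Ha).
  assert (E: rpow (INR j + 1) (2 + a) = rpow (INR j + 1) a * ((INR j + 1) * (INR j + 1))).
  { replace (2 + a) with (a + 2) by ring. rewrite rpow_plus, rpow_pow2; lra. }
  pose proof (rpow_pos (INR j + 1) a ltac:(lra)).
  assert (Hm: rpow (INR j) a <= rpow (INR j + 1) a) by (apply rpow_mono; lra).
  pose proof (rpow_nonneg (INR j) a).
  pose proof (tail_const_pos a Ha).
  apply Rle_trans with (rpow (INR j + 1) a * (tail_const a / rpow (INR j + 1) (2 + a))).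
  apply Rmult_le_compat; lra.
  rewrite E.
  replace (rpow (INR j + 1) a * (tail_const a / (rpow (INR j + 1) a * ((INR j + 1) * (INR j + 1)))))
    with (tail_const a / ((INR j + 1) * (INR j + 1))) by (field; lra).
  replace (2 * tail_const a * (/ (INR j + 1) - / (INR j + 2))) with (tail_const a * 2 / ((INR j + 1) * (INR j + 2)))
    by (field; lra).
  unfold Rdiv. rewrite Rmult_assoc. apply Rmult_le_compat_l. lra.
  apply Rmult_le_reg_r with ((INR j + 1) * (INR j + 1) * (INR j + 2)). nra.
  replace (/ ((INR j + 1) * (INR j + 1)) * ((INR j + 1) * (INR j + 1) * (INR j + 2))) with (INR j + 2)
    by (field; lra).
  replace (2 * / ((INR j + 1) * (INR j + 2)) * ((INR j + 1) * (INR j + 1) * (INR j + 2)))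
    with (2 * (INR j + 1)) by (field; lra). lra.
Qed.

Lemma pT_amom_le a N : 0 < a -> sum_f_R0 (fun j => rpow (INR j) a * pT a j) N <= amom_bound a.
Proof.
  intros Ha.
  assert (H: forall N, sum_f_R0 (fun j => rpow (INR j) a * pT a j) N <= 2 * tail_const a * (1 - / (INR N + 2))).
  { induction N0.
    - simpl sum_f_R0. pose proof (pT_amom_term a 0 Ha). simpl INR in *.
      replace (0 + 1) with 1 in H by ring. rewrite Rinv_1 in H. lra.
    - rewrite tech5. pose proof (pT_amom_term a (S N0) Ha). rewrite S_INR in *.
      replace (INR N0 + 1 + 1) with (INR N0 + 2) in H by ring. lra. }
  eapply Rle_trans. apply H. unfold amom_bound. pose proof (tail_const_pos a Ha).
  pose proof (pos_INR N). assert (0 < / (INR N + 2)) by (apply Rinv_0_lt_compat; lra). nra.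
Qed.

Definition T_mom (a : R) (N : nat) : R := sum_f_R0 (fun j => rpow (INR j) (1 + a) * pT a j) N.

Lemma T_mom_term_upper a j : 0 < a -> rpow (INR j) (1 + a) * pT a j <= tail_const a / (INR j + 1).
Proof.
  intros Ha. pose proof (pos_INR j).
  pose proof (pT_upper a j Ha). pose proof (pT_pos a j Ha).
  assert (E: rpow (INR j + 1) (2 + a) = rpow (INR j + 1) (1 + a) * (INR j + 1)).
  { replace (2 + a) with ((1 + a) + 1) by ring. rewrite rpow_plus, rpow_1; lra. }
  pose proof (rpow_pos (INR j + 1) (1 + a) ltac:(lra)).
  assert (Hm: rpow (INR j) (1 + a) <= rpow (INR j + 1) (1 + a)) by (apply rpow_mono; lra).
  pose proof (rpow_nonneg (INR j) (1 + a)). pose proof (tail_const_pos a Ha).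
  apply Rle_trans with (rpow (INR j + 1) (1 + a) * (tail_const a / rpow (INR j + 1) (2 + a))).
  apply Rmult_le_compat; lra.
  rewrite E. right. field. lra.
Qed.

Lemma T_mom_term_lower a j : 0 < a ->
  tail_const a * (/ (INR j + (2 + a)) - (1 + a) * (2 + a) / ((INR j + (2 + a)) * (INR j + (2 + a))))
  <= rpow (INR j) (1 + a) * pT a j.
Proof.
  intros Ha. pose proof (pos_INR j). pose proof (tail_const_pos a Ha).
  destruct j as [|j].
  - simpl INR. rewrite rpow_0, Rmult_0_l, Rplus_0_l.
    replace (/ (2 + a) - (1 + a) * (2 + a) / ((2 + a) * (2 + a))) with (- a / (2 + a)) by (field; lra).
    assert (0 <= a / (2 + a)) by (apply Rdiv_nonneg; lra).
    unfold Rdiv in *. nra.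
  - set (J := INR (S j)) in *.
    assert (HJ: 0 < J) by (apply INR_S_pos).
    pose proof (pT_lower a (S j) Ha). fold J in H1.
    rewrite rpow_pos_eq in * by lra.
    assert (E: Rpower (J + (2 + a)) (2 + a) = Rpower (J + (2 + a)) (1 + a) * (J + (2 + a))).
    { replace (2 + a) with ((1 + a) + 1) at 2 by ring. rewrite Rpower_plus, Rpower_1; lra. }
    pose proof (Rpower_bernoulli (1 + a) (J / (J + (2 + a))) ltac:(lra) ltac:(apply Rdiv_lt_0_compat; lra)) as B.
    rewrite <- (Rmult_1_l (Rpower (J / (J + (2 + a))) (1 + a))) in B.
    assert (Hq: Rpower (J / (J + (2 + a))) (1 + a) = Rpower J (1 + a) / Rpower (J + (2 + a)) (1 + a)).
    { unfold Rdiv. rewrite <- Rpower_mult_distr by (try apply Rinv_0_lt_compat; lra).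
      f_equal. rewrite <- Rpower_Ropp. unfold Rpower. rewrite ln_Rinv by lra. f_equal; ring. }
    rewrite Rmult_1_l, Hq in B.
    apply Rle_trans with (Rpower J (1 + a) * (tail_const a / Rpower (J + (2 + a)) (2 + a))).
    2: { apply Rmult_le_compat_l. left; apply Rpower_pos. auto. }
    rewrite E.
    pose proof (Rpower_pos (J + (2 + a)) (1 + a)).
    replace (Rpower J (1 + a) * (tail_const a / (Rpower (J + (2 + a)) (1 + a) * (J + (2 + a)))))
      with (tail_const a / (J + (2 + a)) * (Rpower J (1 + a) / Rpower (J + (2 + a)) (1 + a))) by (field; lra).
    replace (tail_const a * (/ (J + (2 + a)) - (1 + a) * (2 + a) / ((J + (2 + a)) * (J + (2 + a)))))
      with (tail_const a / (J + (2 + a)) * (1 + (1 + a) * (J / (J + (2 + a)) - 1))) by (field; lra).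
    apply Rmult_le_compat_l. apply Rdiv_nonneg; lra. auto.
Qed.

Lemma T_mom_upper a N : 0 < a -> T_mom a N <= tail_const a * ln (INR N + 1) + tail_const a.
Proof.
  intros Ha. unfold T_mom.
  apply Rle_trans with (sum_f_R0 (fun j => tail_const a * / (INR j + 1)) N).
  apply sum_Rle. intros. apply T_mom_term_upper; auto.
  rewrite sum_scal_l. pose proof (harmonic_upper N). pose proof (tail_const_pos a Ha). nra.
Qed.

Definition T_mom_defect (a : R) : R := tail_const a * (ln (2 + a) + (2 + a)).

Lemma T_mom_lower a N : 0 < a -> tail_const a * ln (INR N + 1) - tail_const a * (ln (2 + a) + (2 + a)) <= T_mom a N.
Proof.
  intros Ha. unfold T_mom.
  eapply Rle_trans; [|apply sum_Rle; intros; apply T_mom_term_lower; auto].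
  rewrite sum_scal_l.
  replace (sum_f_R0 (fun i => / (INR i + (2 + a)) - (1 + a) * (2 + a) / ((INR i + (2 + a)) * (INR i + (2 + a)))) N)
    with (sum_f_R0 (fun i => / (INR i + (2 + a))) N -
          (1 + a) * (2 + a) * sum_f_R0 (fun i => / ((INR i + (2 + a)) * (INR i + (2 + a)))) N).
  2: { rewrite <- sum_scal_l, <- minus_sum. apply sum_eq. intros. unfold Rdiv. ring. }
  pose proof (harmonic_lower (2 + a) N ltac:(lra)).
  pose proof (inv_square_sum (2 + a) N ltac:(lra)).
  replace (/ (2 + a - 1)) with (/ (1 + a)) in H0 by (f_equal; ring).
  pose proof (pos_INR N).
  assert (ln (INR N + 1) <= ln (INR N + 1 + (2 + a))) by (apply ln_le_mono; lra).
  assert ((1 + a) * (2 + a) * sum_f_R0 (fun i => / ((INR i + (2 + a)) * (INR i + (2 + a)))) N <= 2 + a).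
  { replace (2 + a) with ((1 + a) * (2 + a) * / (1 + a)) at 2 by (field; lra).
    apply Rmult_le_compat_l. nra. auto. }
  pose proof (tail_const_pos a Ha). nra.
Qed.

(** * Truncated moments of the convolution powers *)

Lemma conv_nonneg a m z : 0 < a -> 0 <= conv a m z.
Proof.
  intros Ha. revert z. induction m; intros z; simpl.
  - destruct (Nat.eqb z 0); lra.
  - apply sum_nonneg. intros. apply Rmult_le_pos. left; apply pT_pos; auto. apply IHm.
Qed.

Lemma conv_1 a z : conv a 1 z = pT a z.
Proof.
  simpl. destruct z.
  - simpl. ring.
  - rewrite tech5. rewrite sum_zero.
    + rewrite Nat.sub_diag. simpl. ring.
    + intros j Hj. replace (S z - j)%nat with (S (z - j)) by lia. simpl. ring.
Qed.

(* First-jump decomposition of a truncated expectation over S_(m+1) = T + S_m. *)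
Lemma conv_sum a m i (w : nat -> R) :
  sum_f_R0 (fun z => conv a (S m) z * w z) i =
  sum_f_R0 (fun j => pT a j * sum_f_R0 (fun r => conv a m r * w (j + r)%nat) (i - j)) i.
Proof.
  transitivity (sum_f_R0 (fun z => sum_f_R0 (fun j => (fun j r => pT a j * (conv a m r * w (j + r)%nat)) j (z - j)%nat) z) i).
  - apply sum_eq. intros z Hz. simpl conv. rewrite <- sum_scal_r. apply sum_eq.
    intros j Hj. replace (j + (z - j))%nat with z by lia. ring.
  - rewrite (sum_triangle (fun j r => pT a j * (conv a m r * w (j + r)%nat))). apply sum_eq. intros j Hj. rewrite sum_scal_l. auto.
Qed.

(* Truncated mass, (1+a)-moment, mean and a-moment of S_m:
   P(S_m <= i), E[S_m^(1+a); S_m <= i], E[S_m; S_m <= i], E[S_m^a; S_m <= i]. *)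
Definition cmass (a : R) (m i : nat) : R := sum_f_R0 (fun z => conv a m z) i.

Definition cmom (a : R) (m i : nat) : R := sum_f_R0 (fun z => conv a m z * rpow (INR z) (1 + a)) i.

Definition cmean (a : R) (m i : nat) : R := sum_f_R0 (fun z => conv a m z * INR z) i.

Definition camom (a : R) (m i : nat) : R := sum_f_R0 (fun z => conv a m z * rpow (INR z) a) i.

Lemma cmass_0 a k : cmass a 0 k = 1.
Proof. unfold cmass. induction k. simpl. auto. rewrite tech5, IHk. simpl. ring. Qed.

Lemma cmass_nonneg a m k : 0 < a -> 0 <= cmass a m k.
Proof. intros. unfold cmass. apply sum_nonneg. intros; apply conv_nonneg; auto. Qed.

Lemma cmom_nonneg a m k : 0 < a -> 0 <= cmom a m k.
Proof. intros. unfold cmom. apply sum_nonneg. intros; apply Rmult_le_pos; [apply conv_nonneg; auto|apply rpow_nonneg]. Qed.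

Lemma cmom_mono a m n N : 0 < a -> (n <= N)%nat -> cmom a m n <= cmom a m N.
Proof. intros. unfold cmom. apply sum_mono_N; auto. intros; apply Rmult_le_pos; [apply conv_nonneg; auto|apply rpow_nonneg]. Qed.

Lemma cmass_rec a m i : cmass a (S m) i = sum_f_R0 (fun j => pT a j * cmass a m (i - j)%nat) i.
Proof.
  unfold cmass. rewrite <- (sum_eq (fun z => conv a (S m) z * 1)) by (intros; ring).
  rewrite conv_sum. apply sum_eq. intros. f_equal. apply sum_eq. intros; ring.
Qed.

(* Averaging against P(T = j) preserves an upper bound (the mass of T is <= 1). *)
Lemma conv_avg_le_all a i (X : nat -> R) B : 0 < a -> 0 <= B -> (forall r, X r <= B) ->
  sum_f_R0 (fun j => pT a j * X (i - j)%nat) i <= B.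
Proof.
  intros Ha HB HX.
  apply Rle_trans with (sum_f_R0 (fun j => pT a j * B) i).
  apply sum_Rle. intros. apply Rmult_le_compat_l. left; apply pT_pos; auto. auto.
  rewrite sum_scal_r. pose proof (pT_psum_le1 a i Ha).
  pose proof (sum_nonneg (pT a) i ltac:(intros; left; apply pT_pos; auto)). nra.
Qed.

Lemma conv_avg_le a i (X : nat -> R) B : 0 < a -> 0 <= B -> (forall r, (r <= i)%nat -> X r <= B) ->
  sum_f_R0 (fun j => pT a j * X (i - j)%nat) i <= B.
Proof.
  intros Ha HB HX.
  apply Rle_trans with (sum_f_R0 (fun j => pT a j * B) i).
  apply sum_Rle. intros. apply Rmult_le_compat_l. left; apply pT_pos; auto. apply HX; lia.
  rewrite sum_scal_r. pose proof (pT_psum_le1 a i Ha).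
  pose proof (sum_nonneg (pT a) i ltac:(intros; left; apply pT_pos; auto)). nra.
Qed.

Lemma conv_weighted_le a i (X : nat -> R) (Y : nat -> R) B : 0 < a -> 0 <= B ->
  (forall j, 0 <= Y j) -> (forall r, X r <= B) ->
  sum_f_R0 (fun j => pT a j * (Y j * X (i - j)%nat)) i <= B * sum_f_R0 (fun j => Y j * pT a j) i.
Proof.
  intros Ha HB HY HX. rewrite <- sum_scal_l. apply sum_Rle. intros j Hj.
  pose proof (pT_pos a j Ha). specialize (HY j). specialize (HX (i - j)%nat).
  replace (B * (Y j * pT a j)) with (pT a j * (Y j * B)) by ring.
  apply Rmult_le_compat_l. lra. apply Rmult_le_compat_l; lra.
Qed.

Lemma cmass_le1 a m i : 0 < a -> cmass a m i <= 1.
Proof.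
  intros Ha. revert i. induction m; intros i.
  - unfold cmass. induction i. simpl. lra. rewrite tech5. simpl conv at 2. simpl Nat.eqb. lra.
  - unfold cmass. rewrite <- (sum_eq (fun z => conv a (S m) z * 1)) by (intros; ring).
    rewrite conv_sum. apply conv_avg_le_all; auto. lra.
    intros r. rewrite sum_eq with (Bn := fun z => conv a m z) by (intros; ring). apply IHm.
Qed.

Lemma cmass_cv a m : 0 < a -> forall d, 0 < d -> exists N, forall k, (N <= k)%nat -> 1 - d <= cmass a m k.
Proof.
  intros Ha. induction m; intros d Hd.
  - exists 0%nat. intros. rewrite cmass_0. lra.
  - destruct (pT_psum_large a (d/2) Ha ltac:(lra)) as [N0 H0].
    destruct (IHm (d/2) ltac:(lra)) as [N1 H1].
    exists (N0 + N1)%nat. intros k Hk. rewrite cmass_rec.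
    apply Rle_trans with (sum_f_R0 (fun j => pT a j * cmass a m (k - j)%nat) N0).
    + apply Rle_trans with (sum_f_R0 (fun j => pT a j * (1 - d/2)) N0).
      * rewrite sum_scal_r. specialize (H0 N0 (le_n _)).
        assert (0 <= 1 - d/2 \/ 1 - d/2 < 0) by lra. destruct H.
        -- apply Rle_trans with ((1 - d/2) * (1 - d/2)). nra. apply Rmult_le_compat_r; auto.
        -- assert (sum_f_R0 (pT a) N0 <= 1) by (apply pT_psum_le1; auto). nra.
      * apply sum_Rle. intros j Hj. apply Rmult_le_compat_l. left; apply pT_pos; auto. apply H1. lia.
    + apply sum_mono_N. intros. apply Rmult_le_pos. left; apply pT_pos; auto. apply cmass_nonneg; auto. lia.
Qed.

(* The constant 2^(1+a) - 1 in front of the cross terms of rpow_add_upper. *)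
Definition cross_const (a : R) : R := Rpower 2 (1 + a) - 1.

Lemma cross_const_ge1 a : 0 < a -> 1 <= cross_const a.
Proof. intros. unfold cross_const. pose proof (Rpower2_ge_2 (1 + a) ltac:(lra)). lra. Qed.

Lemma cmean_step a m i B : 0 < a -> 0 <= B -> (forall n, cmean a m n <= B) -> cmean a (S m) i <= mean_bound a + B.
Proof.
  intros Ha HB HM. unfold cmean. rewrite conv_sum.
  rewrite (sum_eq _ (fun j => pT a j * (INR j * cmass a m (i - j)%nat) + pT a j * cmean a m (i - j)%nat)).
  - rewrite plus_sum. apply Rplus_le_compat.
    + apply Rle_trans with (1 * sum_f_R0 (fun j => INR j * pT a j) i).
      apply conv_weighted_le; auto. lra. intros; apply pos_INR. intros. apply cmass_le1; auto.
      rewrite Rmult_1_l. apply pT_mean_le; auto.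
    + apply conv_avg_le; auto.
  - intros j Hj. unfold cmass, cmean. rewrite <- Rmult_plus_distr_l. f_equal.
    rewrite <- sum_scal_l, <- plus_sum. apply sum_eq. intros. rewrite plus_INR. ring.
Qed.

Lemma camom_step a m i B : 0 < a -> 0 <= B -> (forall n, camom a m n <= B) ->
  camom a (S m) i <= Rpower 2 a * (amom_bound a + B).
Proof.
  intros Ha HB HM. unfold camom. rewrite conv_sum.
  apply Rle_trans with (sum_f_R0 (fun j => Rpower 2 a * (pT a j * (rpow (INR j) a * cmass a m (i - j)%nat)) +
                                            Rpower 2 a * (pT a j * camom a m (i - j)%nat)) i).
  - apply sum_Rle. intros j Hj.
    replace (Rpower 2 a * (pT a j * (rpow (INR j) a * cmass a m (i - j))) + Rpower 2 a * (pT a j * camom a m (i - j)))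
      with (pT a j * (Rpower 2 a * (rpow (INR j) a * cmass a m (i - j)%nat + camom a m (i - j)%nat))) by ring.
    apply Rmult_le_compat_l. left; apply pT_pos; auto.
    unfold cmass, camom. rewrite <- (sum_scal_l _ (rpow (INR j) a)), <- plus_sum, <- sum_scal_l. apply sum_Rle. intros r Hr.
    rewrite plus_INR. pose proof (conv_nonneg a m r Ha). pose proof (pos_INR j). pose proof (pos_INR r).
    pose proof (rpow_add_le a (INR j) (INR r) ltac:(lra) H0 H1).
    pose proof (Rpower_pos 2 a).
    replace (Rpower 2 a * (rpow (INR j) a * conv a m r + conv a m r * rpow (INR r) a))
      with (conv a m r * (Rpower 2 a * (rpow (INR j) a + rpow (INR r) a))) by ring.
    apply Rmult_le_compat_l; lra.
  - rewrite plus_sum, sum_scal_l, sum_scal_l. pose proof (Rpower_pos 2 a).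
    rewrite <- Rmult_plus_distr_l. apply Rmult_le_compat_l. lra.
    apply Rplus_le_compat.
    + apply Rle_trans with (1 * sum_f_R0 (fun j => rpow (INR j) a * pT a j) i).
      apply conv_weighted_le; auto. lra. intros; apply rpow_nonneg. intros; apply cmass_le1; auto.
      rewrite Rmult_1_l. apply pT_amom_le; auto.
    + apply conv_avg_le; auto.
Qed.

Lemma cmom_inner_upper a m j n : 0 < a ->
  sum_f_R0 (fun r => conv a m r * rpow (INR (j + r)) (1 + a)) n <=
  rpow (INR j) (1 + a) * cmass a m n + cmom a m n + cross_const a * (rpow (INR j) a * cmean a m n + INR j * camom a m n).
Proof.
  intros Ha. unfold cmass, cmom, cmean, camom.
  apply Rle_trans with (sum_f_R0 (fun r => (rpow (INR j) (1 + a) * conv a m r + conv a m r * rpow (INR r) (1 + a)) +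
     cross_const a * (rpow (INR j) a * (conv a m r * INR r) + INR j * (conv a m r * rpow (INR r) a))) n).
  2: { rewrite !plus_sum, !sum_scal_l, !plus_sum, !sum_scal_l. apply Rle_refl. }
  apply sum_Rle. intros r Hr. rewrite plus_INR.
  pose proof (conv_nonneg a m r Ha). pose proof (pos_INR j). pose proof (pos_INR r).
  pose proof (rpow_add_upper (1 + a) (INR j) (INR r) ltac:(lra) H0 H1) as U.
  replace (1 + a - 1) with a in U by ring. fold (cross_const a) in U.
  replace (rpow (INR j) (1 + a) * conv a m r + conv a m r * rpow (INR r) (1 + a) +
           cross_const a * (rpow (INR j) a * (conv a m r * INR r) + INR j * (conv a m r * rpow (INR r) a)))
    with (conv a m r * (rpow (INR j) (1 + a) + rpow (INR r) (1 + a) +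
           cross_const a * (INR r * rpow (INR j) a + INR j * rpow (INR r) a))) by ring.
  apply Rmult_le_compat_l; lra.
Qed.

Lemma cmom_step a m i X B1 Ba : 0 < a -> 0 <= X -> 0 <= B1 -> 0 <= Ba ->
  (forall n, (n <= i)%nat -> cmom a m n <= X) -> (forall n, cmean a m n <= B1) -> (forall n, camom a m n <= Ba) ->
  cmom a (S m) i <= T_mom a i + X + cross_const a * (amom_bound a * B1 + mean_bound a * Ba).
Proof.
  intros Ha HX HB1 HBa HF HM1 HMa. unfold cmom at 1. rewrite conv_sum.
  pose proof (cross_const_ge1 a Ha) as HC.
  apply Rle_trans with (sum_f_R0 (fun j => pT a j * (rpow (INR j) (1 + a) * cmass a m (i - j)%nat) +
     pT a j * cmom a m (i - j)%nat + cross_const a * (pT a j * (rpow (INR j) a * cmean a m (i - j)%nat)) +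
     cross_const a * (pT a j * (INR j * camom a m (i - j)%nat))) i).
  - apply sum_Rle. intros j Hj. pose proof (cmom_inner_upper a m j (i - j) Ha). pose proof (pT_pos a j Ha).
    replace (pT a j * (rpow (INR j) (1 + a) * cmass a m (i - j)) + pT a j * cmom a m (i - j) +
       cross_const a * (pT a j * (rpow (INR j) a * cmean a m (i - j))) + cross_const a * (pT a j * (INR j * camom a m (i - j))))
      with (pT a j * (rpow (INR j) (1 + a) * cmass a m (i - j) + cmom a m (i - j) +
            cross_const a * (rpow (INR j) a * cmean a m (i - j) + INR j * camom a m (i - j)))) by ring.
    apply Rmult_le_compat_l; lra.
  - rewrite !plus_sum, !sum_scal_l.
    assert (A1: sum_f_R0 (fun j => pT a j * (rpow (INR j) (1 + a) * cmass a m (i - j)%nat)) i <= T_mom a i).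
    { apply Rle_trans with (1 * sum_f_R0 (fun j => rpow (INR j) (1 + a) * pT a j) i).
      apply conv_weighted_le; auto. lra. intros; apply rpow_nonneg. intros; apply cmass_le1; auto.
      rewrite Rmult_1_l. unfold T_mom. lra. }
    assert (A2: sum_f_R0 (fun j => pT a j * cmom a m (i - j)%nat) i <= X).
    { apply conv_avg_le; auto. }
    assert (A3: sum_f_R0 (fun j => pT a j * (rpow (INR j) a * cmean a m (i - j)%nat)) i <= amom_bound a * B1).
    { eapply Rle_trans. apply (conv_weighted_le a i (cmean a m) (fun j => rpow (INR j) a) B1);
        [auto | auto | intros; apply rpow_nonneg | auto].
      rewrite Rmult_comm. apply Rmult_le_compat_r; auto. apply pT_amom_le; auto. }
    assert (A4: sum_f_R0 (fun j => pT a j * (INR j * camom a m (i - j)%nat)) i <= mean_bound a * Ba).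
    { eapply Rle_trans. apply (conv_weighted_le a i (camom a m) INR Ba);
        [auto | auto | intros; apply pos_INR | auto].
      rewrite Rmult_comm. apply Rmult_le_compat_r; auto. apply pT_mean_le; auto. }
    nra.
Qed.

(* A constant K large enough for all the induction steps, with the moments of S_m bounded by K^m. *)
Definition growth_const (a : R) : R := 2 + mean_bound a + amom_bound a + tail_const a + 2 * Rpower 2 a + cross_const a * (amom_bound a + mean_bound a).

Lemma growth_const_facts a : 0 < a ->
  2 <= growth_const a /\ mean_bound a + 1 <= growth_const a /\ amom_bound a <= growth_const a /\ tail_const a <= growth_const a /\ 2 * Rpower 2 a <= growth_const a /\
  2 + cross_const a * (amom_bound a + mean_bound a) <= growth_const a.
Proof.
  intros Ha. unfold growth_const. pose proof (mean_bound_pos a Ha). pose proof (amom_bound_pos a Ha). pose proof (tail_const_pos a Ha).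
  pose proof (Rpower_pos 2 a). pose proof (cross_const_ge1 a Ha).
  assert (0 <= cross_const a * (amom_bound a + mean_bound a)) by (apply Rmult_le_pos; lra).
  repeat split; lra.
Qed.

Lemma conv_moment_bounds_one a i : 0 < a ->
  cmean a 1 i <= growth_const a /\ camom a 1 i <= growth_const a /\
  cmom a 1 i <= tail_const a * ln (INR i + 1) + growth_const a.
Proof.
  intros Ha. destruct (growth_const_facts a Ha) as [K2 [K3 [K4 [K5 _]]]].
  assert (E1: cmean a 1 i = sum_f_R0 (fun z => INR z * pT a z) i)
    by (apply sum_eq; intros; rewrite conv_1; ring).
  assert (E2: camom a 1 i = sum_f_R0 (fun z => rpow (INR z) a * pT a z) i)
    by (apply sum_eq; intros; rewrite conv_1; ring).
  assert (E3: cmom a 1 i = T_mom a i)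
    by (apply sum_eq; intros; rewrite conv_1; ring).
  rewrite E1, E2, E3.
  pose proof (pT_mean_le a i Ha). pose proof (pT_amom_le a i Ha). pose proof (T_mom_upper a i Ha).
  repeat split; lra.
Qed.

Lemma conv_moment_bounds a m : 0 < a -> forall i,
  cmean a (S m) i <= growth_const a ^ (S m) /\ camom a (S m) i <= growth_const a ^ (S m) /\
  cmom a (S m) i <= INR (S m) * tail_const a * ln (INR i + 1) + growth_const a ^ (S m).
Proof.
  intros Ha. destruct (growth_const_facts a Ha) as [K2 [K3 [K4 [K5 [K6 K7]]]]].
  pose proof (mean_bound_pos a Ha). pose proof (amom_bound_pos a Ha). pose proof (tail_const_pos a Ha).
  induction m; intros i.
  - simpl pow. rewrite Rmult_1_r. simpl INR. rewrite Rmult_1_l. apply conv_moment_bounds_one; auto.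
  - set (Kp := growth_const a ^ (S m)).
    assert (HKp: growth_const a <= Kp) by (apply pow_ge_base; lra).
    assert (E: growth_const a ^ (S (S m)) = growth_const a * Kp) by (unfold Kp; simpl; ring).
    rewrite E.
    assert (HM1: forall n, cmean a (S m) n <= Kp) by (intros; apply IHm).
    assert (HMa: forall n, camom a (S m) n <= Kp) by (intros; apply IHm).
    pose proof (ln_succ_nonneg i). pose proof (pos_INR (S m)).
    repeat split.
    + eapply Rle_trans. apply cmean_step; auto. lra. nra.
    + eapply Rle_trans. apply camom_step; auto. lra. pose proof (Rpower_pos 2 a). nra.
    + eapply Rle_trans. apply (cmom_step a (S m) i (INR (S m) * tail_const a * ln (INR i + 1) + Kp) Kp Kp); auto.
      * assert (0 <= INR (S m) * tail_const a * ln (INR i + 1)) by (apply Rmult_le_pos; [apply Rmult_le_pos|]; lra).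
        lra.
      * lra.
      * lra.
      * intros n Hn. eapply Rle_trans. apply IHm. apply Rplus_le_compat_r.
        apply Rmult_le_compat_l. apply Rmult_le_pos; lra.
        apply ln_le_mono. pose proof (pos_INR n); lra. apply le_INR in Hn. lra.
      * pose proof (T_mom_upper a i Ha). rewrite (S_INR (S m)).
        assert (cross_const a * (amom_bound a * Kp + mean_bound a * Kp) = cross_const a * (amom_bound a + mean_bound a) * Kp) by ring.
        assert (tail_const a <= Kp) by lra.
        assert ((2 + cross_const a * (amom_bound a + mean_bound a)) * Kp <= growth_const a * Kp) by (apply Rmult_le_compat_r; lra).
        nra.
Qed.

(* Lower first-jump bound by superadditivity: the new jump and the old ones contribute separately. *)
Lemma cmom_rec_lower a m i : 0 < a ->
  sum_f_R0 (fun j => pT a j * (rpow (INR j) (1 + a) * cmass a m (i - j)%nat)) i +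
  sum_f_R0 (fun j => pT a j * cmom a m (i - j)%nat) i <= cmom a (S m) i.
Proof.
  intros Ha. unfold cmom at 2. rewrite conv_sum. rewrite <- plus_sum. apply sum_Rle. intros j Hj.
  rewrite <- Rmult_plus_distr_l. apply Rmult_le_compat_l. left; apply pT_pos; auto.
  unfold cmass, cmom. rewrite <- sum_scal_l, <- plus_sum. apply sum_Rle. intros r Hr.
  rewrite plus_INR. pose proof (conv_nonneg a m r Ha).
  pose proof (rpow_superadd (1 + a) (INR j) (INR r) ltac:(lra) (pos_INR j) (pos_INR r)).
  replace (rpow (INR j) (1 + a) * conv a m r + conv a m r * rpow (INR r) (1 + a))
    with (conv a m r * (rpow (INR j) (1 + a) + rpow (INR r) (1 + a))) by ring.
  apply Rmult_le_compat_l; lra.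
Qed.

(* Lower bound for the new jump: once S_m stays below i - j with probability
   >= 1 - dl, the summand j^(1+a) P(T = j) contributes (1 - dl) c ln i. *)
Lemma cmom_lower_new_jump a m i NQ dl : 0 < a -> dl < 1 -> (NQ <= i)%nat ->
  (forall k, (NQ <= k)%nat -> 1 - dl <= cmass a m k) ->
  (1 - dl) * (tail_const a * ln (INR i + 1) - tail_const a * ln (INR NQ + 1) - T_mom_defect a) <=
  sum_f_R0 (fun j => pT a j * (rpow (INR j) (1 + a) * cmass a m (i - j)%nat)) i.
Proof.
  intros Ha Hdl Hi HQ.
  apply Rle_trans with (sum_f_R0 (fun j => pT a j * (rpow (INR j) (1 + a) * cmass a m (i - j)%nat)) (i - NQ)).
  - apply Rle_trans with ((1 - dl) * T_mom a (i - NQ)).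
    + apply Rmult_le_compat_l. lra. pose proof (T_mom_lower a (i - NQ) Ha). unfold T_mom_defect.
      pose proof (ln_succ_split i NQ Hi).
      assert (tail_const a * ln (INR i + 1) <= tail_const a * (ln (INR (i - NQ) + 1) + ln (INR NQ + 1)))
        by (apply Rmult_le_compat_l; [pose proof (tail_const_pos a Ha)|]; lra).
      lra.
    + unfold T_mom. rewrite <- sum_scal_l. apply sum_Rle. intros j Hj.
      pose proof (pT_pos a j Ha). pose proof (rpow_nonneg (INR j) (1 + a)).
      assert (1 - dl <= cmass a m (i - j)) by (apply HQ; lia).
      replace ((1 - dl) * (rpow (INR j) (1 + a) * pT a j)) with (pT a j * (rpow (INR j) (1 + a) * (1 - dl))) by ring.
      apply Rmult_le_compat_l. lra. apply Rmult_le_compat_l; lra.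
  - apply sum_mono_N. intros. apply Rmult_le_pos. left; apply pT_pos; auto.
    apply Rmult_le_pos. apply rpow_nonneg. apply cmass_nonneg; auto. lia.
Qed.

(* Shifting a lower bound B ln(k+1) (B <= m c) on cmom a m k by n costs at most
   m c ln(n+1), since ln(i+1) <= ln(i-n+1) + ln(n+1). *)
Lemma cmom_lower_shift a m i n B Nm : 0 < a -> (n + Nm <= i)%nat -> B <= INR m * tail_const a ->
  (forall k, (Nm <= k)%nat -> B * ln (INR k + 1) <= cmom a m k) ->
  B * ln (INR i + 1) - INR m * tail_const a * ln (INR n + 1) <= cmom a m (i - n).
Proof.
  intros Ha Hi HBm HB.
  pose proof (HB (i - n)%nat ltac:(lia)).
  pose proof (ln_succ_split i n ltac:(lia)).
  pose proof (ln_succ_nonneg n). pose proof (ln_succ_nonneg (i - n)).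
  assert (0 <= INR m * tail_const a)
    by (apply Rmult_le_pos; [apply pos_INR | left; apply tail_const_pos; auto]).
  destruct (Rle_dec 0 B).
  - assert (B * ln (INR i + 1) <= B * (ln (INR (i - n) + 1) + ln (INR n + 1)))
      by (apply Rmult_le_compat_l; lra).
    assert (B * ln (INR n + 1) <= INR m * tail_const a * ln (INR n + 1))
      by (apply Rmult_le_compat_r; lra).
    nra.
  - assert (ln (INR (i - n) + 1) <= ln (INR i + 1)).
    { apply ln_le_mono. pose proof (pos_INR (i - n)); lra.
      rewrite minus_INR by lia. pose proof (pos_INR n); lra. }
    assert (B * ln (INR i + 1) <= B * ln (INR (i - n) + 1)) by (apply Rmult_le_compat_neg_l; lra).
    assert (0 <= INR m * tail_const a * ln (INR n + 1)) by (apply Rmult_le_pos; lra).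
    lra.
Qed.

(* Lower bound for the old jumps: with probability >= 1 - dl the new jump is
   at most n, and then the first m jumps carry the induction hypothesis. *)
Lemma cmom_lower_old_jumps a m i n B Nm dl : 0 < a -> dl < 1 -> (n + Nm <= i)%nat ->
  B <= INR m * tail_const a -> 1 - dl <= sum_f_R0 (pT a) n ->
  (forall k, (Nm <= k)%nat -> B * ln (INR k + 1) <= cmom a m k) ->
  (1 - dl) * (B * ln (INR i + 1) - INR m * tail_const a * ln (INR n + 1)) <=
  sum_f_R0 (fun j => pT a j * cmom a m (i - j)%nat) i.
Proof.
  intros Ha Hdl Hi HBm Hn HB.
  pose proof (cmom_lower_shift a m i n B Nm Ha Hi HBm HB) as Hshift.
  set (X := B * ln (INR i + 1) - INR m * tail_const a * ln (INR n + 1)) in *.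
  apply Rle_trans with (sum_f_R0 (fun j => pT a j * cmom a m (i - j)%nat) n).
  - apply Rle_trans with (sum_f_R0 (fun j => pT a j * cmom a m (i - n)%nat) n).
    + rewrite sum_scal_r. pose proof (cmom_nonneg a m (i - n) Ha).
      destruct (Rle_dec 0 X).
      * apply Rle_trans with ((1 - dl) * cmom a m (i - n)). apply Rmult_le_compat_l; lra.
        apply Rmult_le_compat_r; lra.
      * assert (0 <= sum_f_R0 (pT a) n * cmom a m (i - n)).
        { apply Rmult_le_pos; auto. apply sum_nonneg; intros; left; apply pT_pos; auto. }
        nra.
    + apply sum_Rle. intros j Hj. apply Rmult_le_compat_l. left; apply pT_pos; auto.
      apply cmom_mono; auto. lia.
  - apply sum_mono_N. intros. apply Rmult_le_pos. left; apply pT_pos; auto. apply cmom_nonneg; auto. lia.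
Qed.

Lemma lower_bound_bookkeeping A e dl L Cst Y : 0 < e -> 0 < A -> dl * A = e / 4 -> 0 < dl < 1 ->
  0 <= Cst -> 4 * Cst / e <= L -> (1 - dl) * (A - e/2) * L - (1 - dl) * Cst <= Y -> (A - e) * L <= Y.
Proof.
  intros He HA HdA Hdl HCst HL HY.
  assert (HL0: 0 <= L) by (apply Rle_trans with (4 * Cst / e); auto; apply Rdiv_nonneg; lra).
  assert (K2: (A - 3 * e / 4) * L <= (1 - dl) * (A - e/2) * L).
  { apply Rmult_le_compat_r; auto. nra. }
  assert (K3: (1 - dl) * Cst <= Cst) by nra.
  assert (K4: Cst <= e / 4 * L).
  { apply Rmult_le_reg_l with (4 / e). apply Rdiv_lt_0_compat; lra.
    replace (4 / e * (e / 4 * L)) with L by (field; lra).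
    replace (4 / e * Cst) with (4 * Cst / e) by (field; lra). auto. }
  nra.
Qed.

(* Heavy tails add up (lower half): E[S_m^(1+a); S_m <= i] >= (m c - e) ln(i+1)
   eventually, by induction on m, splitting S_(m+1) = T + S_m. *)
Lemma cmom_lower a m : 0 < a -> forall e, 0 < e -> exists N, forall i, (N <= i)%nat ->
  (INR m * tail_const a - e) * ln (INR i + 1) <= cmom a m i.
Proof.
  intros Ha. pose proof (tail_const_pos a Ha) as Hc.
  induction m; intros e He.
  - exists 0%nat. intros i _. pose proof (cmom_nonneg a 0 i Ha). pose proof (ln_succ_nonneg i).
    simpl INR. nra.
  - set (A := INR (S m) * tail_const a).
    assert (HA: 0 < A) by (unfold A; apply Rmult_lt_0_compat; [apply INR_S_pos|auto]).
    destruct (Rle_dec A e) as [HAe|HAe].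
    { exists 0%nat. intros i _. pose proof (cmom_nonneg a (S m) i Ha). pose proof (ln_succ_nonneg i). nra. }
    apply Rnot_le_lt in HAe.
    (* a relative mass defect dl = e/(4A) costs e/4 in the constant *)
    set (dl := e / (4 * A)).
    assert (Hdl: 0 < dl) by (unfold dl; apply Rdiv_lt_0_compat; lra).
    assert (HdA: dl * A = e / 4) by (unfold dl; field; lra).
    assert (Hdl1: dl < 1) by (apply Rmult_lt_reg_r with A; auto; rewrite HdA; lra).
    destruct (cmass_cv a m Ha dl Hdl) as [NQ HQ].
    destruct (pT_psum_large a dl Ha Hdl) as [n Hn].
    destruct (IHm (e/2) ltac:(lra)) as [Nm HNm].
    (* the additive losses Cst are eventually below (e/4) ln(i+1) *)
    set (Cst := tail_const a * ln (INR NQ + 1) + T_mom_defect a + INR m * tail_const a * ln (INR n + 1)).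
    assert (HCst: 0 <= Cst).
    { unfold Cst, T_mom_defect. pose proof (ln_succ_nonneg NQ). pose proof (ln_succ_nonneg n).
      pose proof (pos_INR m).
      assert (0 <= ln (2 + a)) by (rewrite <- ln_1; apply ln_le_mono; lra).
      assert (0 <= tail_const a * ln (INR NQ + 1)) by (apply Rmult_le_pos; lra).
      assert (0 <= tail_const a * (ln (2 + a) + (2 + a))) by (apply Rmult_le_pos; lra).
      assert (0 <= INR m * tail_const a) by (apply Rmult_le_pos; lra).
      assert (0 <= INR m * tail_const a * ln (INR n + 1)) by (apply Rmult_le_pos; lra).
      lra. }
    destruct (INR_unbounded (exp (4 * Cst / e))) as [NL HNL].
    exists (NQ + n + Nm + NL)%nat. intros i Hi.
    set (L := ln (INR i + 1)).
    assert (HL: 4 * Cst / e <= L).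
    { unfold L. rewrite <- (ln_exp (4 * Cst / e)). apply ln_le_mono. apply exp_pos.
      apply le_INR in Hi. rewrite !plus_INR in Hi. pose proof (pos_INR NQ). pose proof (pos_INR n).
      pose proof (pos_INR Nm). lra. }
    pose proof (cmom_lower_new_jump a m i NQ dl Ha Hdl1 ltac:(lia) HQ) as New.
    pose proof (cmom_lower_old_jumps a m i n (INR m * tail_const a - e/2) Nm dl Ha Hdl1
                  ltac:(lia) ltac:(lra) (Hn n (le_n _)) HNm) as Old.
    pose proof (cmom_rec_lower a m i Ha) as Rec.
    fold L in New, Old.
    assert (HAeq: A = tail_const a + INR m * tail_const a) by (unfold A; rewrite S_INR; ring).
    assert (Key: (1 - dl) * (tail_const a * L - tail_const a * ln (INR NQ + 1) - T_mom_defect a) +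
                 (1 - dl) * ((INR m * tail_const a - e/2) * L - INR m * tail_const a * ln (INR n + 1))
                 = (1 - dl) * (A - e/2) * L - (1 - dl) * Cst) by (unfold Cst; rewrite HAeq; ring).
    fold A. apply (lower_bound_bookkeeping A e dl L Cst); auto; lra.
Qed.

(** * The weighted moment H_m(i) ~ m c ln i *)

Definition gamma_weight (a : R) (m z : nat) : R :=
  Gamma (INR z + 2 * INR m + a + 1) / Gamma (INR z + 2 * INR m).

Definition wmom (a : R) (m i : nat) : R := sum_f_R0 (fun z => conv a m z * gamma_weight a m z) i.

Definition wshift (a : R) (m : nat) : R := 2 * INR m + a.

Lemma gamma_weight_bounds a m z : 0 < a -> (1 <= m)%nat ->
  rpow (INR z) (1 + a) <= gamma_weight a m z <= rpow (INR z + wshift a m) (1 + a).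
Proof.
  intros Ha Hm. unfold gamma_weight, wshift. apply le_INR in Hm. simpl in Hm. pose proof (pos_INR z).
  set (x := INR z + 2 * INR m).
  assert (Hx: 0 < x) by (unfold x; lra).
  pose proof (Gamma_pos x Hx).
  pose proof (Gamma_ratio_lower x (1 + a) Hx ltac:(lra)) as L.
  pose proof (Gamma_ratio_upper x (1 + a) Hx ltac:(lra)) as U.
  replace (x + (1 + a)) with (INR z + 2 * INR m + a + 1) in L, U by (unfold x; ring).
  replace (INR z + 2 * INR m + a + 1 - 1) with (INR z + (2 * INR m + a)) in U by ring.
  split.
  - apply Rle_trans with (Rpower x (1 + a)).
    + destruct (Rle_lt_or_eq_dec 0 (INR z) (pos_INR z)) as [Hz|Hz].
      rewrite rpow_pos_eq by lra. apply Rle_Rpower_l. lra. unfold x; split; lra.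
      rewrite <- Hz, rpow_0. left; apply Rpower_pos.
    + apply Rmult_le_reg_r with (Gamma x); auto. unfold Rdiv. rewrite Rmult_assoc, Rinv_l by lra. unfold x in *. lra.
  - rewrite rpow_pos_eq by lra.
    apply Rmult_le_reg_r with (Gamma x); auto. unfold Rdiv. rewrite Rmult_assoc, Rinv_l by lra. unfold x in *. lra.
Qed.

Lemma wmom_lower a m i : 0 < a -> (1 <= m)%nat -> cmom a m i <= wmom a m i.
Proof.
  intros. unfold cmom, wmom. apply sum_Rle. intros z Hz. apply Rmult_le_compat_l. apply conv_nonneg; auto.
  apply gamma_weight_bounds; auto.
Qed.

(* The error constant produced by the shift 2m + a in the upper bound for H_m. *)
Definition shift_err (a : R) (m : nat) : R :=
  rpow (wshift a m) (1 + a) + cross_const a * (wshift a m + rpow (wshift a m) a) * growth_const a ^ m.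

Lemma wmom_upper a m i : 0 < a -> wmom a (S m) i <= cmom a (S m) i + shift_err a (S m).
Proof.
  intros Ha. unfold wmom, shift_err.
  set (d := wshift a (S m)).
  assert (Hd: 0 < d) by (unfold d, wshift; pose proof (pos_INR (S m)); lra).
  destruct (conv_moment_bounds a m Ha i) as [B1 [B2 _]].
  pose proof (cmass_le1 a (S m) i Ha) as HQ.
  apply Rle_trans with (sum_f_R0 (fun z => conv a (S m) z * rpow (INR z) (1 + a) + rpow d (1 + a) * conv a (S m) z +
     cross_const a * (d * (conv a (S m) z * rpow (INR z) a) + rpow d a * (conv a (S m) z * INR z))) i).
  - apply sum_Rle. intros z Hz. pose proof (conv_nonneg a (S m) z Ha).
    pose proof (gamma_weight_bounds a (S m) z Ha ltac:(lia)) as [_ G].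
    pose proof (rpow_add_upper (1 + a) (INR z) d ltac:(lra) (pos_INR z) ltac:(lra)) as U.
    replace (1 + a - 1) with a in U by ring. fold (cross_const a) in U. fold d in G.
    replace (conv a (S m) z * rpow (INR z) (1 + a) + rpow d (1 + a) * conv a (S m) z +
      cross_const a * (d * (conv a (S m) z * rpow (INR z) a) + rpow d a * (conv a (S m) z * INR z)))
      with (conv a (S m) z * (rpow (INR z) (1 + a) + rpow d (1 + a) + cross_const a * (d * rpow (INR z) a + INR z * rpow d a)))
      by ring.
    apply Rmult_le_compat_l; lra.
  - rewrite !plus_sum, !sum_scal_l, !plus_sum, !sum_scal_l.
    fold (cmom a (S m) i). fold (camom a (S m) i). fold (cmean a (S m) i).
    change (sum_f_R0 (conv a (S m)) i) with (cmass a (S m) i).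
    pose proof (rpow_nonneg d (1 + a)). pose proof (rpow_nonneg d a). pose proof (cross_const_ge1 a Ha).
    assert (rpow d (1 + a) * cmass a (S m) i <= rpow d (1 + a)) by (pose proof (cmass_nonneg a (S m) i Ha); nra).
    assert (d * camom a (S m) i + rpow d a * cmean a (S m) i <= (d + rpow d a) * growth_const a ^ S m).
    { assert (d * camom a (S m) i <= d * growth_const a ^ S m) by (apply Rmult_le_compat_l; lra).
      assert (rpow d a * cmean a (S m) i <= rpow d a * growth_const a ^ S m) by (apply Rmult_le_compat_l; lra). nra. }
    assert (cross_const a * (d * camom a (S m) i + rpow d a * cmean a (S m) i) <= cross_const a * ((d + rpow d a) * growth_const a ^ S m))
      by (apply Rmult_le_compat_l; lra).
    lra.
Qed.

Lemma shift_err_nonneg a m : 0 < a -> 0 <= shift_err a (S m).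
Proof.
  intros Ha. unfold shift_err. pose proof (rpow_nonneg (wshift a (S m)) (1 + a)). pose proof (rpow_nonneg (wshift a (S m)) a).
  pose proof (cross_const_ge1 a Ha). destruct (growth_const_facts a Ha) as [K2 _].
  assert (0 <= wshift a (S m)) by (unfold wshift; pose proof (pos_INR (S m)); lra).
  assert (0 <= growth_const a ^ S m) by (apply pow_le; lra).
  assert (0 <= cross_const a * (wshift a (S m) + rpow (wshift a (S m)) a)) by (apply Rmult_le_pos; lra).
  assert (0 <= cross_const a * (wshift a (S m) + rpow (wshift a (S m)) a) * growth_const a ^ S m) by (apply Rmult_le_pos; lra). lra.
Qed.

Lemma wmom_nonneg a m i : 0 < a -> 0 <= wmom a (S m) i.
Proof.
  intros Ha. pose proof (wmom_lower a (S m) i Ha ltac:(lia)). pose proof (cmom_nonneg a (S m) i Ha). lra.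
Qed.

Lemma wmom_cv a m : 0 < a -> Un_cv (fun i => wmom a (S m) i / (tail_const a * ln (INR i + 1))) (INR (S m)).
Proof.
  intros Ha e He. pose proof (tail_const_pos a Ha) as Hc.
  assert (Hec: 0 < e * tail_const a) by (apply Rmult_lt_0_compat; lra).
  destruct (cmom_lower a (S m) Ha (e * tail_const a / 2) ltac:(lra)) as [N1 HN1].
  pose proof (shift_err_nonneg a m Ha).
  pose proof (pow_le (growth_const a) (S m) ltac:(destruct (growth_const_facts a Ha); lra)).
  destruct (ln_unbounded (Rmax 1 ((growth_const a ^ S m + shift_err a (S m)) / (e * tail_const a)))) as [N2 HN2].
  exists (N1 + N2)%nat. intros i Hi. unfold Rdist.
  specialize (HN1 i ltac:(lia)). specialize (HN2 i ltac:(lia)).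
  set (L := ln (INR i + 1)) in *.
  assert (HL1: 1 < L) by (pose proof (Rmax_l 1 ((growth_const a ^ S m + shift_err a (S m)) / (e * tail_const a))); lra).
  assert (HL2: (growth_const a ^ S m + shift_err a (S m)) / (e * tail_const a) < L)
    by (pose proof (Rmax_r 1 ((growth_const a ^ S m + shift_err a (S m)) / (e * tail_const a))); lra).
  apply div_close. apply Rmult_lt_0_compat; lra.
  pose proof (wmom_lower a (S m) i Ha ltac:(lia)). pose proof (wmom_upper a m i Ha).
  destruct (conv_moment_bounds a m Ha i) as [_ [_ HF]]. fold L in HF.
  assert (HK: growth_const a ^ S m + shift_err a (S m) < e * tail_const a * L).
  { apply Rmult_lt_reg_r with (/ (e * tail_const a)). apply Rinv_0_lt_compat; apply Rmult_lt_0_compat; lra.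
    replace (e * tail_const a * L * / (e * tail_const a)) with L by (field; lra). auto. }
  apply Rabs_def1.
  - assert (INR (S m) * tail_const a * L = INR (S m) * (tail_const a * L)) by ring. nra.
  - assert (e * tail_const a * L > 0) by (apply Rmult_lt_0_compat; [apply Rmult_lt_0_compat|]; lra).
    nra.
Qed.

(* The bound produced by the moment estimates, to be dominated geometrically in m. *)
Definition ratio_bound (a : R) (m : nat) : R := INR m + (growth_const a ^ m + shift_err a m) / tail_const a.

Definition dom_rate (a : R) : R := 2 * growth_const a * Rpower 2 (1 + a) * Rpower 2 a.

Definition dom_const (a : R) : R := 1 + (1 + rpow (2 + a) (1 + a) + cross_const a * ((2 + a) + rpow (2 + a) a)) / tail_const a.

Lemma wmom_upper_log a m i : 0 < a -> wmom a (S m) i <= tail_const a * (ln (INR i + 1) + 1) * ratio_bound a (S m).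
Proof.
  intros Ha. pose proof (wmom_upper a m i Ha). destruct (conv_moment_bounds a m Ha i) as [_ [_ HF]].
  pose proof (tail_const_pos a Ha). pose proof (ln_succ_nonneg i). pose proof (shift_err_nonneg a m Ha).
  pose proof (pow_le (growth_const a) (S m) ltac:(destruct (growth_const_facts a Ha); lra)). pose proof (pos_INR (S m)).
  unfold ratio_bound.
  replace (tail_const a * (ln (INR i + 1) + 1) * (INR (S m) + (growth_const a ^ S m + shift_err a (S m)) / tail_const a))
    with (INR (S m) * tail_const a * ln (INR i + 1) + INR (S m) * tail_const a + (ln (INR i + 1) + 1) * (growth_const a ^ S m + shift_err a (S m)))
    by (field; lra).
  assert (0 <= INR (S m) * tail_const a) by (apply Rmult_le_pos; lra).
  assert (0 <= ln (INR i + 1) * (growth_const a ^ S m + shift_err a (S m))) by (apply Rmult_le_pos; lra).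
  nra.
Qed.

Lemma wmom_ratio_bound a m i : 0 < a -> (2 <= i)%nat ->
  0 <= wmom a (S m) i / (tail_const a * ln (INR i + 1)) <= INR (S m) + (growth_const a ^ S m + shift_err a (S m)) / tail_const a.
Proof.
  intros Ha Hi. pose proof (tail_const_pos a Ha).
  assert (HL: 1 <= ln (INR i + 1)).
  { eapply Rle_trans. apply ln3_ge1. apply ln_le_mono. lra. apply le_INR in Hi. simpl in Hi. lra. }
  pose proof (wmom_lower a (S m) i Ha ltac:(lia)). pose proof (wmom_upper a m i Ha).
  destruct (conv_moment_bounds a m Ha i) as [_ [_ HF]]. pose proof (cmom_nonneg a (S m) i Ha).
  pose proof (shift_err_nonneg a m Ha). pose proof (pow_le (growth_const a) (S m) ltac:(destruct (growth_const_facts a Ha); lra)).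
  set (L := ln (INR i + 1)) in *.
  assert (HcL: 0 < tail_const a * L) by nra.
  split.
  - apply Rdiv_nonneg; lra.
  - apply Rmult_le_reg_r with (tail_const a * L); auto.
    replace (wmom a (S m) i / (tail_const a * L) * (tail_const a * L)) with (wmom a (S m) i) by (field; lra).
    replace ((INR (S m) + (growth_const a ^ S m + shift_err a (S m)) / tail_const a) * (tail_const a * L))
      with (INR (S m) * tail_const a * L + (growth_const a ^ S m + shift_err a (S m)) * L) by (field; lra).
    assert (growth_const a ^ S m + shift_err a (S m) <= (growth_const a ^ S m + shift_err a (S m)) * L) by nra.
    lra.
Qed.

Lemma rpow_wshift_geom a p n : 0 < a -> 0 <= p ->
  rpow (wshift a n) p <= rpow (2 + a) p * Rpower 2 p ^ n.
Proof.
  intros Ha Hp. unfold wshift. pose proof (INR_le_pow2 n).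
  assert (H2n: 1 <= 2 ^ n) by (apply pow_R1_Rle; lra).
  apply Rle_trans with (rpow ((2 + a) * 2 ^ n) p).
  { apply rpow_mono; auto. pose proof (pos_INR n). split; nra. }
  rewrite rpow_mult, rpow_two_pow by (try lra; apply pow_le; lra). lra.
Qed.

Lemma dom_rate_bounds a : 0 < a ->
  2 * growth_const a <= dom_rate a /\ Rpower 2 (1 + a) <= dom_rate a /\
  Rpower 2 a * growth_const a <= dom_rate a.
Proof.
  intros Ha. unfold dom_rate. destruct (growth_const_facts a Ha) as [K2 _].
  set (K := growth_const a) in *. set (P := Rpower 2 (1 + a)). set (Q := Rpower 2 a).
  assert (HP: 1 <= P) by (apply Rpower2_ge1; lra).
  assert (HQ: 1 <= Q) by (apply Rpower2_ge1; lra).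
  repeat split.
  - assert (0 <= 2 * K * P) by nra. nra.
  - assert (1 <= 2 * K * Q) by nra. replace (2 * K * P * Q) with (P * (2 * K * Q)) by ring. nra.
  - assert (0 <= Q * K) by nra. replace (2 * K * P * Q) with ((Q * K) * (2 * P)) by ring. nra.
Qed.

Lemma dom_rate_pos a : 0 < a -> 0 < dom_rate a.
Proof.
  intros Ha. unfold dom_rate. destruct (growth_const_facts a Ha) as [K2 _].
  pose proof (Rpower_pos 2 (1 + a)). pose proof (Rpower_pos 2 a).
  assert (0 < 2 * growth_const a) by lra.
  assert (0 < 2 * growth_const a * Rpower 2 (1 + a)) by (apply Rmult_lt_0_compat; lra).
  apply Rmult_lt_0_compat; lra.
Qed.

Lemma dom_const_nonneg a : 0 < a -> 0 <= dom_const a.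
Proof.
  intros Ha. unfold dom_const. pose proof (rpow_nonneg (2 + a) (1 + a)). pose proof (rpow_nonneg (2 + a) a).
  pose proof (cross_const_ge1 a Ha). pose proof (tail_const_pos a Ha).
  assert (0 <= cross_const a * (2 + a + rpow (2 + a) a)) by (apply Rmult_le_pos; lra).
  assert (0 <= (1 + rpow (2 + a) (1 + a) + cross_const a * (2 + a + rpow (2 + a) a)) / tail_const a)
    by (apply Rdiv_nonneg; lra).
  lra.
Qed.

(* Geometric domination ratio_bound a m <= C L^m, summable against Poisson weights. *)
Lemma ratio_bound_geom a m : 0 < a -> ratio_bound a (S m) <= dom_const a * dom_rate a ^ S m.
Proof.
  intros Ha. set (n := S m). unfold ratio_bound, shift_err, dom_const.
  destruct (growth_const_facts a Ha) as [K2 _]. pose proof (tail_const_pos a Ha) as Hc.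
  pose proof (cross_const_ge1 a Ha) as HC. destruct (dom_rate_bounds a Ha) as [E1 [E2 E3]].
  pose proof (rpow_wshift_geom a (1 + a) n Ha ltac:(lra)) as HdP.
  pose proof (rpow_wshift_geom a a n Ha ltac:(lra)) as HdQ.
  pose proof (INR_le_pow2 n) as Hn.
  assert (Hd: wshift a n <= (2 + a) * 2 ^ n).
  { unfold wshift. assert (1 <= 2 ^ n) by (apply pow_R1_Rle; lra). nra. }
  assert (Hd0: 0 <= wshift a n) by (unfold wshift; pose proof (pos_INR n); lra).
  set (K := growth_const a) in *. set (P := Rpower 2 (1 + a)) in *. set (Q := Rpower 2 a) in *.
  set (Lm := dom_rate a) in *.
  assert (HQ: 1 <= Q) by (apply Rpower2_ge1; lra).
  assert (Hpow: forall x, 0 <= x <= Lm -> x ^ n <= Lm ^ n) by (intros; apply pow_incr; auto).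
  assert (hK: K ^ n <= Lm ^ n) by (apply Hpow; split; lra).
  assert (h2: 2 ^ n <= Lm ^ n) by (apply Hpow; split; lra).
  assert (HP: 0 < P) by apply Rpower_pos.
  assert (hP: P ^ n <= Lm ^ n) by (apply Hpow; split; lra).
  assert (h2K: 2 ^ n * K ^ n <= Lm ^ n) by (rewrite <- Rpow_mult_distr; apply Hpow; split; lra).
  assert (hQK: Q ^ n * K ^ n <= Lm ^ n) by (rewrite <- Rpow_mult_distr; apply Hpow; split; nra).
  pose proof (rpow_nonneg (2 + a) (1 + a)). pose proof (rpow_nonneg (2 + a) a).
  pose proof (pow_le K n ltac:(lra)). pose proof (pow_le Q n ltac:(lra)). pose proof (pow_le 2 n ltac:(lra)).
  pose proof (pow_le Lm n ltac:(lra)).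
  assert (A1: rpow (wshift a n) (1 + a) <= rpow (2 + a) (1 + a) * Lm ^ n) by nra.
  assert (A2: wshift a n * K ^ n <= (2 + a) * Lm ^ n)
    by (apply Rle_trans with ((2 + a) * (2 ^ n * K ^ n)); nra).
  assert (A3: rpow (wshift a n) a * K ^ n <= rpow (2 + a) a * Lm ^ n)
    by (apply Rle_trans with (rpow (2 + a) a * (Q ^ n * K ^ n)); nra).
  assert (A4: cross_const a * (wshift a n + rpow (wshift a n) a) * K ^ n
              <= cross_const a * ((2 + a) + rpow (2 + a) a) * Lm ^ n).
  { replace (cross_const a * (wshift a n + rpow (wshift a n) a) * K ^ n)
      with (cross_const a * (wshift a n * K ^ n + rpow (wshift a n) a * K ^ n)) by ring.
    replace (cross_const a * ((2 + a) + rpow (2 + a) a) * Lm ^ n)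
      with (cross_const a * ((2 + a) * Lm ^ n + rpow (2 + a) a * Lm ^ n)) by ring.
    apply Rmult_le_compat_l; lra. }
  assert (T: K ^ n + (rpow (wshift a n) (1 + a) + cross_const a * (wshift a n + rpow (wshift a n) a) * K ^ n)
             <= (1 + rpow (2 + a) (1 + a) + cross_const a * ((2 + a) + rpow (2 + a) a)) * Lm ^ n) by lra.
  replace ((1 + (1 + rpow (2 + a) (1 + a) + cross_const a * (2 + a + rpow (2 + a) a)) / tail_const a) * Lm ^ n)
    with (Lm ^ n + ((1 + rpow (2 + a) (1 + a) + cross_const a * (2 + a + rpow (2 + a) a)) * Lm ^ n) / tail_const a)
    by (field; lra).
  apply Rplus_le_compat. lra.
  unfold Rdiv. apply Rmult_le_compat_r. left; apply Rinv_0_lt_compat; lra. lra.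
Qed.

Lemma wmom_geom a m i : 0 < a ->
  wmom a (S m) i <= tail_const a * (ln (INR i + 1) + 1) * (dom_const a * dom_rate a ^ S m).
Proof.
  intros Ha. eapply Rle_trans. apply wmom_upper_log; auto.
  apply Rmult_le_compat_l. 2: apply ratio_bound_geom; auto.
  pose proof (tail_const_pos a Ha). pose proof (ln_succ_nonneg i). apply Rmult_le_pos; lra.
Qed.

(** * The prefactor U_m(i) ~ i^(-2-a) *)

Definition prefactor (a : R) (i m : nat) : R :=
  Gamma (INR i + 2 * INR m) / Gamma (INR i + 2 * INR m + a + 2).

Definition scaled_prefactor (a : R) (i m : nat) : R := prefactor a i m * Rpower (INR i) (2 + a).

Lemma prefactor_pos a i m : 0 < a -> (1 <= m)%nat -> 0 < prefactor a i m.
Proof.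
  intros Ha Hm. apply le_INR in Hm. simpl in Hm. pose proof (pos_INR i).
  unfold prefactor. apply Rdiv_lt_0_compat; apply Gamma_pos; lra.
Qed.

Lemma prefactor_bounds_gen (I x s G0 G1 : R) : 0 < I -> I <= x -> 1 <= s -> 0 < G0 ->
  G0 * Rpower x s <= G1 -> G1 <= G0 * Rpower (x + s - 1) s ->
  1 - s * (x - I + s - 1) / (x + s - 1) <= G0 / G1 * Rpower I s /\ 0 <= G0 / G1 * Rpower I s <= 1.
Proof.
  intros HI HIx Hs HG0 L U.
  pose proof (Rpower_pos I s). pose proof (Rpower_pos x s). pose proof (Rpower_pos (x + s - 1) s).
  assert (HG1: 0 < G1) by nra.
  assert (Hix: Rpower I s <= Rpower x s) by (apply Rle_Rpower_l; lra).
  split; [|split].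
  - apply Rle_trans with (Rpower I s / Rpower (x + s - 1) s).
    + assert (E: Rpower I s / Rpower (x + s - 1) s = Rpower (I / (x + s - 1)) s).
      { unfold Rdiv. rewrite <- Rpower_mult_distr by (try apply Rinv_0_lt_compat; lra).
        f_equal. rewrite <- Rpower_Ropp. unfold Rpower. rewrite ln_Rinv by lra. f_equal; ring. }
      rewrite E. eapply Rle_trans; [|apply Rpower_bernoulli; [lra|apply Rdiv_lt_0_compat; lra]].
      right. field. lra.
    + unfold Rdiv. rewrite (Rmult_comm (G0 * / G1)). apply Rmult_le_compat_l. lra.
      apply Rmult_le_reg_r with (G1 * Rpower (x + s - 1) s). nra.
      replace (/ Rpower (x + s - 1) s * (G1 * Rpower (x + s - 1) s)) with G1 by (field; lra).
      replace (G0 * / G1 * (G1 * Rpower (x + s - 1) s)) with (G0 * Rpower (x + s - 1) s) by (field; lra). lra.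
  - apply Rmult_le_pos; [|lra]. apply Rdiv_nonneg; lra.
  - apply Rle_trans with (Rpower I s / Rpower x s).
    + unfold Rdiv. rewrite (Rmult_comm (G0 * / G1)). apply Rmult_le_compat_l. lra.
      apply Rmult_le_reg_r with (G1 * Rpower x s). nra.
      replace (/ Rpower x s * (G1 * Rpower x s)) with G1 by (field; lra).
      replace (G0 * / G1 * (G1 * Rpower x s)) with (G0 * Rpower x s) by (field; lra). lra.
    + apply Rdiv_le_1; lra.
Qed.

Lemma scaled_prefactor_bounds a i m : 0 < a -> (1 <= i)%nat -> (1 <= m)%nat ->
  1 - (2 + a) * (2 * INR m + 1 + a) / (INR i + 2 * INR m + 1 + a) <= scaled_prefactor a i m /\ 0 <= scaled_prefactor a i m <= 1.
Proof.
  intros Ha Hi Hm. apply le_INR in Hi, Hm. simpl in Hi, Hm. unfold scaled_prefactor, prefactor.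
  assert (Hx: 0 < INR i + 2 * INR m) by lra.
  pose proof (Gamma_ratio_lower (INR i + 2 * INR m) (2 + a) Hx ltac:(lra)) as L.
  pose proof (Gamma_ratio_upper (INR i + 2 * INR m) (2 + a) Hx ltac:(lra)) as U.
  replace (INR i + 2 * INR m + (2 + a)) with (INR i + 2 * INR m + a + 2) in L by ring.
  replace (Gamma (INR i + 2 * INR m + (2 + a))) with (Gamma (INR i + 2 * INR m + a + 2)) in U
    by (apply Gamma_arg; ring).
  pose proof (prefactor_bounds_gen (INR i) (INR i + 2 * INR m) (2 + a) (Gamma (INR i + 2 * INR m))
     (Gamma (INR i + 2 * INR m + a + 2)) ltac:(lra) ltac:(lra) ltac:(lra) (Gamma_pos _ Hx) L U) as G.
  replace ((2 + a) * (INR i + 2 * INR m - INR i + (2 + a) - 1) / (INR i + 2 * INR m + (2 + a) - 1))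
    with ((2 + a) * (2 * INR m + 1 + a) / (INR i + 2 * INR m + 1 + a)) in G by (field; lra).
  exact G.
Qed.

Lemma prefactor_upper a i m : 0 < a -> (1 <= i)%nat -> (1 <= m)%nat -> prefactor a i m <= / Rpower (INR i) (2 + a).
Proof.
  intros Ha Hi Hm. destruct (scaled_prefactor_bounds a i m Ha Hi Hm) as [_ [_ H]]. unfold scaled_prefactor in H.
  pose proof (Rpower_pos (INR i) (2 + a)).
  apply Rmult_le_reg_r with (Rpower (INR i) (2 + a)); auto. rewrite Rinv_l by lra. auto.
Qed.

Lemma scaled_prefactor_cv a m : 0 < a -> Un_cv (fun i => scaled_prefactor a i (S m)) 1.
Proof.
  intros Ha e He.
  pose proof (pos_INR (S m)).
  set (c := (2 + a) * (2 * INR (S m) + 1 + a)).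
  assert (Hc: 0 < c) by (unfold c; apply Rmult_lt_0_compat; lra).
  destruct (inv_cv (2 * INR (S m) + 1 + a) ltac:(lra) (e / c) ltac:(apply Rdiv_lt_0_compat; lra)) as [N HN].
  exists (N + 1)%nat. intros i Hi. specialize (HN i ltac:(lia)). unfold Rdist in *.
  destruct (scaled_prefactor_bounds a i (S m) Ha ltac:(lia) ltac:(lia)) as [L [U0 U1]].
  rewrite Rminus_0_r in HN. pose proof (pos_INR i).
  rewrite Rabs_right in HN by (left; apply Rinv_0_lt_compat; lra).
  replace ((2 + a) * (2 * INR (S m) + 1 + a) / (INR i + 2 * INR (S m) + 1 + a))
    with (c * / (INR i + (2 * INR (S m) + 1 + a))) in L by (unfold c; field; lra).
  assert (c * / (INR i + (2 * INR (S m) + 1 + a)) < e).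
  { apply Rmult_lt_reg_l with (/ c). apply Rinv_0_lt_compat; lra.
    replace (/ c * (c * / (INR i + (2 * INR (S m) + 1 + a)))) with (/ (INR i + (2 * INR (S m) + 1 + a)))
      by (field; lra).
    replace (/ c * e) with (e / c) by (field; lra). lra. }
  rewrite Rabs_left1 by lra. lra.
Qed.

(** * Poisson weights *)

Lemma poisson_pos lam m : 0 < lam -> 0 < poisson lam m.
Proof.
  intros. unfold poisson. apply Rdiv_lt_0_compat. apply Rmult_lt_0_compat. apply exp_pos.
  apply pow_lt; auto. apply INR_fact_lt_0.
Qed.

Lemma poisson_exp lam La : infinite_sum (fun m => poisson lam m * La ^ m) (exp (- lam) * exp (lam * La)).
Proof.
  pose proof (proj2_sig (exist_exp (lam * La))) as H. change (exp_in (lam * La) (exp (lam * La))) in H.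
  unfold exp_in in H. apply inf_sum_scal with (c := exp (- lam)) in H.
  eapply inf_sum_ext; [|apply H]. intros n. unfold poisson. rewrite Rpow_mult_distr.
  pose proof (INR_fact_lt_0 n). field. lra.
Qed.

Definition size_biased (lam : R) (m : nat) : R := poisson lam m * INR m / lam.

Lemma size_biased_sum lam : 0 < lam -> infinite_sum (size_biased lam) 1.
Proof.
  intros Hl.
  assert (E: forall N, sum_f_R0 (size_biased lam) (S N) = sum_f_R0 (fun m => poisson lam m * 1 ^ m) N).
  { induction N.
    - simpl. unfold size_biased, poisson. simpl. field. lra.
    - rewrite tech5, IHN, tech5. f_equal. unfold size_biased, poisson. rewrite pow1.
      change (Factorial.fact (S (S N))) with ((S (S N)) * Factorial.fact (S N))%nat.
      rewrite mult_INR. change (lam ^ S (S N)) with (lam * lam ^ (S N)).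
      pose proof (INR_fact_lt_0 (S N)). pose proof (INR_S_pos (S N)). field. lra. }
  pose proof (poisson_exp lam 1) as P. rewrite Rmult_1_r, <- exp_plus, Rplus_opp_l, exp_0 in P.
  unfold infinite_sum. fold (Un_cv (sum_f_R0 (size_biased lam)) 1).
  apply CV_shift with 1%nat. eapply Un_cv_ext_from with (N := 0%nat). 2: apply P.
  intros n _. replace (n + 1)%nat with (S n) by lia. apply E.
Qed.

Lemma yterm_0 lam a i : yterm lam a i 0 = 0.
Proof. unfold yterm. simpl. auto. Qed.

Lemma yterm_S lam a i m :
  yterm lam a i (S m) = (1 + a) * poisson lam (S m) * (prefactor a i (S m) * wmom a (S m) i).
Proof.
  unfold yterm. change (Nat.eqb (S m) 0) with false. cbv iota.
  f_equal. unfold wmom. rewrite <- sum_scal_l. apply sum_eq. intros. unfold yfactor, prefactor, gamma_weight. ring.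
Qed.

Definition yterm_dom (a : R) (i : nat) : R :=
  (1 + a) * / Rpower (INR i) (2 + a) * (tail_const a * (ln (INR i + 1) + 1)) * dom_const a.

Lemma yterm_bound lam a i m : 0 < lam -> 0 < a -> (1 <= i)%nat ->
  0 <= yterm lam a i m <= yterm_dom a i * (poisson lam m * dom_rate a ^ m).
Proof.
  intros Hl Ha Hi.
  pose proof (tail_const_pos a Ha). pose proof (ln_succ_nonneg i). pose proof (dom_const_nonneg a Ha).
  assert (0 < / Rpower (INR i) (2 + a)) by (apply Rinv_0_lt_compat, Rpower_pos).
  assert (0 <= tail_const a * (ln (INR i + 1) + 1)) by (apply Rmult_le_pos; lra).
  assert (Hdom: 0 <= yterm_dom a i).
  { unfold yterm_dom. apply Rmult_le_pos; auto. apply Rmult_le_pos; auto. apply Rmult_le_pos; lra. }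
  pose proof (poisson_pos lam m Hl).
  pose proof (pow_le (dom_rate a) m ltac:(left; apply dom_rate_pos; auto)).
  destruct m.
  - rewrite yterm_0. split. lra. apply Rmult_le_pos; auto. apply Rmult_le_pos; lra.
  - rewrite yterm_S. pose proof (prefactor_pos a i (S m) Ha ltac:(lia)).
    pose proof (wmom_nonneg a m i Ha).
    split.
    + apply Rmult_le_pos. apply Rmult_le_pos; lra. apply Rmult_le_pos; lra.
    + pose proof (prefactor_upper a i (S m) Ha Hi ltac:(lia)). pose proof (wmom_geom a m i Ha).
      assert (HUH: prefactor a i (S m) * wmom a (S m) i <= / Rpower (INR i) (2 + a) *
                     (tail_const a * (ln (INR i + 1) + 1) * (dom_const a * dom_rate a ^ S m)))
        by (apply Rmult_le_compat; lra).
      unfold yterm_dom.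
      replace ((1 + a) * / Rpower (INR i) (2 + a) * (tail_const a * (ln (INR i + 1) + 1)) * dom_const a
               * (poisson lam (S m) * dom_rate a ^ S m))
        with ((1 + a) * poisson lam (S m) * (/ Rpower (INR i) (2 + a) *
               (tail_const a * (ln (INR i + 1) + 1) * (dom_const a * dom_rate a ^ S m)))) by ring.
      apply Rmult_le_compat_l. apply Rmult_le_pos; lra. auto.
Qed.

(* The series defining y_i converges: it is dominated by a Poisson-weighted geometric series. *)
Lemma yterm_summable lam a i : 0 < lam -> 0 < a -> (1 <= i)%nat -> exists l, infinite_sum (yterm lam a i) l.
Proof.
  intros Hl Ha Hi.
  destruct (Rseries_CV_comp (yterm lam a i) (fun m => yterm_dom a i * (poisson lam m * dom_rate a ^ m))) as [l Hlim].
  - intros m. apply yterm_bound; auto.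
  - exists (yterm_dom a i * (exp (- lam) * exp (lam * dom_rate a))). apply inf_sum_scal. apply poisson_exp.
  - exists l. exact Hlim.
Qed.

(* The claimed order of y_i, with ln(i+1) in place of ln i. *)
Definition target_scale (lam a : R) (i : nat) : R :=
  lam * (1 + a) ^ 2 * Gamma (2 + a) * Rpower (INR i) (- 2 - a) * ln (INR i + 1).

Lemma normalized_yterm_eq lam a i m : 0 < lam -> 0 < a -> (1 <= i)%nat ->
  yterm lam a i (S m) / target_scale lam a i =
  poisson lam (S m) / lam * scaled_prefactor a i (S m) * (wmom a (S m) i / (tail_const a * ln (INR i + 1))).
Proof.
  intros Hl Ha Hi. rewrite yterm_S. unfold target_scale, scaled_prefactor, tail_const.
  replace (- 2 - a) with (- (2 + a)) by ring. rewrite Rpower_Ropp.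
  pose proof (Gamma_pos (2 + a) ltac:(lra)). pose proof (Rpower_pos (INR i) (2 + a)).
  pose proof (ln_succ_pos i Hi).
  field. repeat split; lra.
Qed.

Lemma normalized_yterm_cv lam a m : 0 < lam -> 0 < a ->
  Un_cv (fun i => yterm lam a i m / target_scale lam a i) (size_biased lam m).
Proof.
  intros Hl Ha. destruct m.
  - apply Un_cv_ext_from with (N := 0%nat) (v := fun _ => 0).
    + intros. rewrite yterm_0. unfold Rdiv; ring.
    + eapply Un_cv_eq_lim. apply Un_cv_const. unfold size_biased. simpl INR. unfold Rdiv; ring.
  - apply Un_cv_ext_from with (N := 1%nat)
      (v := fun i => poisson lam (S m) / lam * scaled_prefactor a i (S m)
                     * (wmom a (S m) i / (tail_const a * ln (INR i + 1)))).
    + intros i Hi. apply normalized_yterm_eq; auto.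
    + eapply Un_cv_eq_lim. apply CV_mult. apply CV_mult. apply Un_cv_const.
      apply scaled_prefactor_cv; auto. apply wmom_cv; auto. unfold size_biased. field. lra.
Qed.

Lemma normalized_yterm_dominated lam a i m : 0 < lam -> 0 < a -> (2 <= i)%nat ->
  Rabs (yterm lam a i m / target_scale lam a i) <= poisson lam m / lam * (dom_const a * dom_rate a ^ m).
Proof.
  intros Hl Ha Hi. pose proof (poisson_pos lam m Hl).
  assert (HB: 0 <= poisson lam m / lam * (dom_const a * dom_rate a ^ m)).
  { apply Rmult_le_pos. apply Rdiv_nonneg; lra. apply Rmult_le_pos. apply dom_const_nonneg; auto.
    apply pow_le. left; apply dom_rate_pos; auto. }
  destruct m.
  - rewrite yterm_0. unfold Rdiv at 1. rewrite Rmult_0_l, Rabs_R0. auto.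
  - rewrite normalized_yterm_eq by (auto; lia).
    destruct (scaled_prefactor_bounds a i (S m) Ha ltac:(lia) ltac:(lia)) as [_ [U0 U1]].
    destruct (wmom_ratio_bound a m i Ha Hi) as [V0 V1].
    pose proof (ratio_bound_geom a m Ha). unfold ratio_bound in H0.
    assert (Hp: 0 <= poisson lam (S m) / lam) by (apply Rdiv_nonneg; lra).
    rewrite Rabs_right.
    2: { apply Rle_ge. apply Rmult_le_pos; [apply Rmult_le_pos|]; lra. }
    rewrite Rmult_assoc. apply Rmult_le_compat_l; auto.
    apply Rle_trans with (1 * (wmom a (S m) i / (tail_const a * ln (INR i + 1)))).
    apply Rmult_le_compat_r; lra. lra.
Qed.

(* Tannery's theorem with the size-biased Poisson weights summing to 1. *)
Lemma normalized_y_cv lam a (y : nat -> R) : 0 < lam -> 0 < a ->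
  (forall i, (1 <= i)%nat -> infinite_sum (yterm lam a i) (y i)) ->
  Un_cv (fun i => y i / target_scale lam a i) 1.
Proof.
  intros Hl Ha Hy.
  apply (tannery (fun i m => yterm lam a i m / target_scale lam a i) (size_biased lam)
          (fun m => poisson lam m / lam * (dom_const a * dom_rate a ^ m)) _ 1
          (/ lam * dom_const a * (exp (- lam) * exp (lam * dom_rate a))) 2).
  - intros m. apply normalized_yterm_cv; auto.
  - intros i m Hi. apply normalized_yterm_dominated; auto.
  - eapply inf_sum_ext; [| apply inf_sum_scal with (c := / lam * dom_const a); apply poisson_exp].
    intros; unfold Rdiv; ring.
  - apply size_biased_sum; auto.
  - intros i Hi. replace (y i / target_scale lam a i) with (/ target_scale lam a i * y i) by (unfold Rdiv; ring).
    eapply inf_sum_ext; [| apply inf_sum_scal with (c := / target_scale lam a i); apply Hy; lia].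
    intros; unfold Rdiv; ring.
Qed.

Theorem mainTheorem2 (lambda : R) (k : nat) :
  0 < lambda -> (1 <= k)%nat ->
  let alpha := INR k / lambda in
  (forall i : nat, (1 <= i)%nat -> exists l, infinite_sum (yterm lambda alpha i) l) /\
  (forall y : nat -> R,
     (forall i : nat, (1 <= i)%nat -> infinite_sum (yterm lambda alpha i) (y i)) ->
     Un_cv (fun i => y i /
              (lambda * (1 + alpha) ^ 2 * Gamma (2 + alpha)
               * Rpower (INR i) (- 2 - alpha) * ln (INR i))) 1).
Proof.
  intros Hl Hk alpha.
  assert (Ha: 0 < alpha) by (apply Rdiv_lt_0_compat; auto; apply lt_0_INR; lia).
  clearbody alpha.
  split.
  - intros i Hi. apply yterm_summable; auto.
  - intros y Hy.
    apply Un_cv_ext_from with (N := 2%nat)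
      (v := fun i => y i / target_scale lambda alpha i * (ln (INR i + 1) / ln (INR i))).
    + intros i Hi. unfold target_scale.
      pose proof (Gamma_pos (2 + alpha) ltac:(lra)). pose proof (Rpower_pos (INR i) (- 2 - alpha)).
      pose proof (ln_succ_pos i ltac:(lia)).
      assert (0 < ln (INR i)) by (apply le_INR in Hi; simpl in Hi; rewrite <- ln_1; apply ln_increasing; lra).
      assert (0 < (1 + alpha) ^ 2) by (apply pow_lt; lra).
      field. repeat split; lra.
    + eapply Un_cv_eq_lim. apply CV_mult. apply normalized_y_cv; auto. apply ln_ratio_cv. ring.
Qed.
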